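(* Let $x_1,\dots,x_{n-1}>0$, $\gamma,\delta>0$, $\gamma\neq1\neq\delta$, set $x_0=1$, and for a matrix below let $\lambda=\lambda_{\max}$ denote its Perron eigenvalue and $\mathbf{w}^{EM}=(w_1,\dots,w_n)^T$ its principal right eigenvector. Then: Case 1 ($n\ge4$; matrix $\mathbf{P}$ with entries $x_{j-1}/x_{i-1}$ except $p_{12}=\delta x_1$, $p_{21}=1/(\delta x_1)$, $p_{13}=\gamma x_2$, $p_{31}=1/(\gamma x_2)$). $\mathbf{w}^{EM}$ can be taken as: $w_1=\delta\gamma\lambda(\lambda-n+1)$, $w_2=\frac1{x_1}[\gamma\lambda-(n-2)\gamma+\delta+(n-3)\delta\gamma]$, $w_3=\frac1{x_2}[\delta\lambda-(n-2)\delta+\gamma+(n-3)\delta\gamma]$, $w_i=\frac1{x_{i-1}}[\gamma+\delta+\delta\gamma\lambda-2\delta\gamma]$ ($i\ge4$). Moreover there are real constants $c_{11},c_{12},c_{13}$ such that $\mathbf{w}^{EM}=c_{11}\mathbf{u}=c_{12}\mathbf{v}=c_{13}\mathbf{z}$, where $u_1=x_1\gamma\lambda[\delta\lambda-(n-2)\delta+\gamma+n-3]$, $u_2=\gamma\lambda^3-(n-1)\gamma\lambda^2-(n-3)(\gamma^2-2\gamma+1)$, $u_3=\frac{x_1}{x_2}[\gamma\lambda^2-\gamma\lambda+\delta\lambda+(n-3)(\delta\gamma-\delta-\gamma+1)]$, $u_i=\frac{x_1}{x_{i-1}}[\gamma\lambda^2-\gamma\lambda-\gamma+\delta+\delta\gamma\lambda-\delta\gamma+\gamma^2]$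 ($i\ge4$); $v_1=x_2\delta\lambda[\delta+\gamma\lambda-(n-2)\gamma+n-3]$, $v_2=\frac{x_2}{x_1}[\delta\lambda^2-\delta\lambda+\gamma\lambda+(n-3)(\delta\gamma-\delta-\gamma+1)]$, $v_3=\delta\lambda^3-(n-1)\delta\lambda^2-(n-3)(\delta^2-2\delta+1)$, $v_i=\frac{x_2}{x_{i-1}}[\delta\lambda^2-\delta\lambda+\gamma-\delta+\delta^2+\delta\gamma\lambda-\delta\gamma]$ ($i\ge4$); $z_1=x_3\delta\gamma\lambda(\delta+\gamma+\lambda-2)$, $z_2=\frac{x_3}{x_1}[\delta\gamma\lambda^2-\delta\gamma\lambda+\gamma^2+\gamma\lambda-\gamma-\delta\gamma+\delta]$, $z_3=\frac{x_3}{x_2}[\delta\gamma\lambda^2-\delta\gamma\lambda-\delta\gamma+\gamma+\delta^2+\delta\lambda-\delta]$, $z_i=\frac{x_3}{x_{i-1}}[\delta\gamma\lambda^2-4\delta\gamma+\gamma+\delta+\delta^2\gamma+\gamma^2\delta]$ ($i\ge4$). Case 2A ($n=4$; matrix $\mathbf{Q}$ with entries $x_{j-1}/x_{i-1}$ except $q_{12}=\delta x_1$, $q_{21}=1/(\delta x_1)$, $q_{34}=\gamma x_3/x_2$, $q_{43}=x_2/(\gamma x_3)$). $\mathbf{w}^{EM}$ can be taken as: $w_1=\delta(\lambda^3\gamma-3\lambda^2\gamma-1+2\gamma-\gamma^2)$, $w_2=\frac1{x_1}[\lambda^2\gamma-2\lambda\gamma+\delta+2\lambda\delta\gamma-2\delta\gamma+\delta\gamma^2]$,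 $w_3=\frac{\gamma}{x_2}[\gamma+\lambda-1+\delta\lambda^2-2\lambda\delta+\delta+\lambda\delta\gamma-\delta\gamma]$, $w_4=\frac1{x_3}[1+\lambda\gamma-\gamma+\lambda\delta-\delta+\delta\gamma\lambda^2-2\lambda\delta\gamma+\delta\gamma]$. Moreover there are real $c_{21},c_{22},c_{23}$ with $\mathbf{w}^{EM}=c_{21}\mathbf{u}=c_{22}\mathbf{v}=c_{23}\mathbf{z}$, where $u_1=x_1[\delta\gamma\lambda^2-2\lambda\delta\gamma+1+2\lambda\gamma-2\gamma+\gamma^2]$, $u_2=\lambda^3\gamma-3\lambda^2\gamma-1+2\gamma-\gamma^2$, $u_3=\frac{x_1}{x_2}\gamma[\lambda\gamma+\lambda^2-2\lambda-\gamma+1+\lambda\delta-\delta+\delta\gamma]$, $u_4=\frac{x_1}{x_3}[\lambda+\lambda^2\gamma-2\lambda\gamma-1+\gamma+\delta+\lambda\delta\gamma-\delta\gamma]$; $v_1=x_2\delta(1+\lambda\gamma-\gamma)(\delta+\lambda-1)$, $v_2=\frac{x_2}{x_1}[1+\lambda\gamma-\gamma+\lambda\delta-\delta+\delta\gamma\lambda^2-2\lambda\delta\gamma+\delta\gamma]$, $v_3=\gamma(\delta\lambda^3-3\delta\lambda^2-1+2\delta-\delta^2)$, $v_4=\frac{x_2}{x_3}[2\lambda\delta\gamma+\delta\lambda^2-2\lambda\delta-2\delta\gamma+\gamma+\delta^2\gamma]$; $z_1=x_3\delta(\lambda\gamma+\lambda^2-2\lambda-\gamma+1+\lambda\delta-\delta+\delta\gamma)$,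 $z_2=\frac{x_3}{x_1}[\gamma+\lambda-1+\delta\lambda^2-2\lambda\delta+\delta+\lambda\delta\gamma-\delta\gamma]$, $z_3=\frac{x_3}{x_2}[2\lambda\delta+\delta\gamma\lambda^2-2\lambda\delta\gamma-2\delta+1+\delta^2]$, $z_4=\delta\lambda^3-3\delta\lambda^2-1+2\delta-\delta^2$. Case 2B ($n\ge5$; matrix $\mathbf{R}$ with entries $x_{j-1}/x_{i-1}$ except $r_{12}=\delta x_1$, $r_{21}=1/(\delta x_1)$, $r_{34}=\gamma x_3/x_2$, $r_{43}=x_2/(\gamma x_3)$). $\mathbf{w}^{EM}$ can be taken as: $w_1=\delta\lambda[\lambda^3\gamma-(n-1)\lambda^2\gamma-(n-3)(\gamma^2-2\gamma+1)]$, $w_2=\frac1{x_1}\{\lambda^3\gamma-(n-2)\lambda^2\gamma+(n-2)\delta\gamma\lambda^2+[\lambda\delta+(n-4)(\delta-1)](\gamma^2-2\gamma+1)\}$, $w_3=\frac{\gamma\lambda}{x_2}[\gamma+\lambda-1+\delta\lambda^2-2\lambda\delta+\delta+\lambda\delta\gamma-\delta\gamma]$, $w_4=\frac{\lambda}{x_3}[1+\lambda\gamma-\gamma+\lambda\delta-\delta+\delta\gamma\lambda^2-2\lambda\delta\gamma+\delta\gamma]$, $w_i=\frac1{x_{i-1}}[\gamma^2-2\gamma+\lambda^2\gamma+1+\lambda\delta-\delta\gamma\lambda^2-2\lambda\delta\gamma+\lambda\gamma^2\delta+\lambda^3\delta\gamma-\delta+2\delta\gamma-\delta\gamma^2]$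 ($i\ge5$). Moreover there are real $c_{31},c_{32},c_{33},c_{34}$ with $\mathbf{w}^{EM}=c_{31}\mathbf{u}=c_{32}\mathbf{v}=c_{33}\mathbf{z}=c_{34}\mathbf{y}$, where $u_1=x_1[\lambda^3\delta\gamma-(n-2)\delta\gamma\lambda^2-(n-4)\delta(\gamma-1)^2+\lambda+(n-2)\lambda^2\gamma-2\lambda\gamma+\lambda\gamma^2+(n-4)(\gamma-1)^2]$, $u_2=\lambda(\lambda^3\gamma-(n-1)\lambda^2\gamma-(n-3)(\gamma-1)^2)$, $u_3=\frac{x_1}{x_2}\gamma\lambda(\lambda\gamma+\lambda^2-2\lambda-\gamma+1+\delta\lambda-\delta+\delta\gamma)$, $u_4=\frac{x_1}{x_3}\lambda(\lambda+\lambda^2\gamma-2\lambda\gamma-1+\gamma+\delta+\lambda\delta\gamma-\delta\gamma)$, $u_i=\frac{x_1}{x_{i-1}}(\lambda\gamma^2-2\lambda\gamma+\lambda^3\gamma+\lambda-\gamma^2+2\gamma-\lambda^2\gamma-1+\delta-2\delta\gamma+\delta\gamma^2+\delta\gamma\lambda^2)$ ($i\ge5$); $v_1=x_2\delta\lambda(1+\lambda\gamma-\gamma)(\delta+\lambda-1)$, $v_2=\frac{x_2}{x_1}\lambda(1+\lambda\gamma-\gamma)(1+\delta\lambda-\delta)$, $v_3=\gamma\lambda[\lambda^3\delta-(n-1)\delta\lambda^2-(n-3)(\delta-1)^2]$, $v_4=\frac{x_2}{x_3}[\delta\lambda^3-(n-2)\delta\lambda^2(1-\gamma)-2\lambda\delta\gamma+2(n-4)\delta(1-\gamma)+\lambda\gamma+\delta^2\lambda\gamma+(n-4)(-1+\gamma-\delta^2+\delta^2\gamma)]$,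 $v_i=\frac{x_2}{x_{i-1}}(1+\lambda\gamma-\gamma)(\delta\lambda^2+1-2\delta+\delta^2)$ ($i\ge5$); $z_1=x_3\delta\lambda(\lambda\gamma+\lambda^2-2\lambda-\gamma+1+\delta\lambda-\delta+\delta\gamma)$, $z_2=\frac{x_3}{x_1}\lambda(\gamma+\lambda-1)(1+\delta\lambda-\delta)$, $z_3=\frac{x_3}{x_2}[\lambda^3\delta\gamma-(n-2)\delta\lambda^2(\gamma-1)-2\delta\lambda+2(n-4)\delta(\gamma-1)+\lambda+\delta^2\lambda+(n-4)(1-\gamma+\delta^2-\delta^2\gamma)]$, $z_4=\lambda[\delta\lambda^3-(n-1)\delta\lambda^2-(n-3)(\delta-1)^2]$, $z_i=\frac{x_3}{x_{i-1}}(\delta\gamma\lambda^2+\lambda^3\delta-\delta\lambda^2-2\delta\lambda-2\delta\gamma+2\delta-1+\gamma+\lambda+\delta^2\lambda-\delta^2+\delta^2\gamma)$ ($i\ge5$); $y_1=x_4\delta\lambda(\gamma^2-2\gamma+\lambda^2\gamma+1)(\delta+\lambda-1)$, $y_2=\frac{x_4}{x_1}\lambda(\gamma^2-2\gamma+\lambda^2\gamma+1)(1+\delta\lambda-\delta)$, $y_3=\frac{x_4}{x_2}\gamma\lambda(\delta\gamma\lambda^2+\lambda^3\delta-\delta\lambda^2-2\delta\lambda-2\delta\gamma+2\delta-1+\gamma+\lambda+\delta^2\lambda-\delta^2+\delta^2\gamma)$, $y_4=\frac{x_4}{x_3}\lambda(\delta\lambda^2+\lambda^3\delta\gamma-\delta\gamma\lambda^2-2\lambda\delta\gamma-2\delta+2\delta\gamma-\gamma+1+\lambda\gamma+\delta^2+\delta^2\lambda\gamma-\delta^2\gamma)$,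 $y_i=\frac{x_4}{x_{i-1}}(\gamma^2-2\gamma+\lambda^2\gamma+1)(\delta\lambda^2+1-2\delta+\delta^2)$ ($i\ge5$).
   Context: The principal right eigenvector of a positive matrix is its Perron eigenvector (positive eigenvector for the largest eigenvalue $\lambda_{\max}$), determined up to a positive scalar multiple. *)

From HB Require Import structures.
From mathcomp Require Import all_boot all_order all_algebra.
From mathcomp Require Import reals.
Set Implicit Arguments. Unset Strict Implicit. Unset Printing Implicit Defensive.
Import Order.TTheory GRing.Theory Num.Theory.
Local Open Scope ring_scope.

Section Defs.
Variable R : realType.

Definition is_lambda_max (n : nat) (A : 'M[R]_n) (l : R) : Prop :=
  eigenvalue A l /\ (forall m : R, eigenvalue A m -> m <= l).

Definition is_principal_right_eigvec (n : nat) (A : 'M[R]_n) (w : 'cV[R]_n)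
  : Prop :=
  exists l : R, [/\ is_lambda_max A l, A *m w = l *: w &
                    forall i : 'I_n, 0 < w i ord0].

(* A column vector given by a function of the 0-based index k
   (k = paper index i minus 1). *)
Definition mkcol (n : nat) (f : nat -> R) : 'cV[R]_n := \col_(i < n) f (i : nat).

(* Base entries x_{j-1}/x_{i-1} (paper) = x j / x i (0-based), x 0 = 1. *)

Definition Pmat (n : nat) (x : nat -> R) (d g : R) : 'M[R]_n :=
  \matrix_(i < n, j < n)
    if ((i : nat) == 0%N) && ((j : nat) == 1%N) then d * x 1%N
    else if ((i : nat) == 1%N) && ((j : nat) == 0%N) then (d * x 1%N)^-1
    else if ((i : nat) == 0%N) && ((j : nat) == 2%N) then g * x 2%N
    else if ((i : nat) == 2%N) && ((j : nat) == 0%N) then (g * x 2%N)^-1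
    else x j / x i.

(* Q (n = 4) and R (n >= 5) have the same defining pattern. *)
Definition QRmat (n : nat) (x : nat -> R) (d g : R) : 'M[R]_n :=
  \matrix_(i < n, j < n)
    if ((i : nat) == 0%N) && ((j : nat) == 1%N) then d * x 1%N
    else if ((i : nat) == 1%N) && ((j : nat) == 0%N) then (d * x 1%N)^-1
    else if ((i : nat) == 2%N) && ((j : nat) == 3%N) then g * x 3%N / x 2%N
    else if ((i : nat) == 3%N) && ((j : nat) == 2%N) then x 2%N / (g * x 3%N)
    else x j / x i.

(* ---------- Case 1 vectors (d = delta, g = gamma, l = lambda) ---------- *)
Section Case1.
Variables (n : nat) (x : nat -> R) (d g l : R).
Let N : R := n%:R.

Definition w1 : 'cV[R]_n := mkcol n (fun k =>
  if k == 0%N then d * g * l * (l - N + 1)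
  else if k == 1%N then (x 1%N)^-1 * (g * l - (N - 2) * g + d + (N - 3) * d * g)
  else if k == 2%N then (x 2%N)^-1 * (d * l - (N - 2) * d + g + (N - 3) * d * g)
  else (x k)^-1 * (g + d + d * g * l - 2 * d * g)).

Definition u1 : 'cV[R]_n := mkcol n (fun k =>
  if k == 0%N then x 1%N * g * l * (d * l - (N - 2) * d + g + N - 3)
  else if k == 1%N then g * l ^+ 3 - (N - 1) * g * l ^+ 2 - (N - 3) * (g ^+ 2 - 2 * g + 1)
  else if k == 2%N then x 1%N / x 2%N *
      (g * l ^+ 2 - g * l + d * l + (N - 3) * (d * g - d - g + 1))
  else x 1%N / x k *
      (g * l ^+ 2 - g * l - g + d + d * g * l - d * g + g ^+ 2)).

Definition v1 : 'cV[R]_n := mkcol n (fun k =>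
  if k == 0%N then x 2%N * d * l * (d + g * l - (N - 2) * g + N - 3)
  else if k == 1%N then x 2%N / x 1%N *
      (d * l ^+ 2 - d * l + g * l + (N - 3) * (d * g - d - g + 1))
  else if k == 2%N then d * l ^+ 3 - (N - 1) * d * l ^+ 2 - (N - 3) * (d ^+ 2 - 2 * d + 1)
  else x 2%N / x k *
      (d * l ^+ 2 - d * l + g - d + d ^+ 2 + d * g * l - d * g)).

Definition z1 : 'cV[R]_n := mkcol n (fun k =>
  if k == 0%N then x 3%N * d * g * l * (d + g + l - 2)
  else if k == 1%N then x 3%N / x 1%N *
      (d * g * l ^+ 2 - d * g * l + g ^+ 2 + g * l - g - d * g + d)
  else if k == 2%N then x 3%N / x 2%N *
      (d * g * l ^+ 2 - d * g * l - d * g + g + d ^+ 2 + d * l - d)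
  else x 3%N / x k *
      (d * g * l ^+ 2 - 4 * d * g + g + d + d ^+ 2 * g + g ^+ 2 * d)).
End Case1.

Section Case2A.
Variables (x : nat -> R) (d g l : R).

Definition w2A : 'cV[R]_4 := mkcol 4 (fun k =>
  if k == 0%N then d * (l ^+ 3 * g - 3 * l ^+ 2 * g - 1 + 2 * g - g ^+ 2)
  else if k == 1%N then (x 1%N)^-1 *
      (l ^+ 2 * g - 2 * l * g + d + 2 * l * d * g - 2 * d * g + d * g ^+ 2)
  else if k == 2%N then g / x 2%N *
      (g + l - 1 + d * l ^+ 2 - 2 * l * d + d + l * d * g - d * g)
  else (x 3%N)^-1 *
      (1 + l * g - g + l * d - d + d * g * l ^+ 2 - 2 * l * d * g + d * g)).

Definition u2A : 'cV[R]_4 := mkcol 4 (fun k =>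
  if k == 0%N then x 1%N *
      (d * g * l ^+ 2 - 2 * l * d * g + 1 + 2 * l * g - 2 * g + g ^+ 2)
  else if k == 1%N then l ^+ 3 * g - 3 * l ^+ 2 * g - 1 + 2 * g - g ^+ 2
  else if k == 2%N then x 1%N / x 2%N * g *
      (l * g + l ^+ 2 - 2 * l - g + 1 + l * d - d + d * g)
  else x 1%N / x 3%N *
      (l + l ^+ 2 * g - 2 * l * g - 1 + g + d + l * d * g - d * g)).

Definition v2A : 'cV[R]_4 := mkcol 4 (fun k =>
  if k == 0%N then x 2%N * d * (1 + l * g - g) * (d + l - 1)
  else if k == 1%N then x 2%N / x 1%N *
      (1 + l * g - g + l * d - d + d * g * l ^+ 2 - 2 * l * d * g + d * g)
  else if k == 2%N then g * (d * l ^+ 3 - 3 * d * l ^+ 2 - 1 + 2 * d - d ^+ 2)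
  else x 2%N / x 3%N *
      (2 * l * d * g + d * l ^+ 2 - 2 * l * d - 2 * d * g + g + d ^+ 2 * g)).

Definition z2A : 'cV[R]_4 := mkcol 4 (fun k =>
  if k == 0%N then x 3%N * d *
      (l * g + l ^+ 2 - 2 * l - g + 1 + l * d - d + d * g)
  else if k == 1%N then x 3%N / x 1%N *
      (g + l - 1 + d * l ^+ 2 - 2 * l * d + d + l * d * g - d * g)
  else if k == 2%N then x 3%N / x 2%N *
      (2 * l * d + d * g * l ^+ 2 - 2 * l * d * g - 2 * d + 1 + d ^+ 2)
  else d * l ^+ 3 - 3 * d * l ^+ 2 - 1 + 2 * d - d ^+ 2).
End Case2A.

Section Case2B.
Variables (n : nat) (x : nat -> R) (d g l : R).
Let N : R := n%:R.

Definition w2B : 'cV[R]_n := mkcol n (fun k =>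
  if k == 0%N then d * l *
      (l ^+ 3 * g - (N - 1) * l ^+ 2 * g - (N - 3) * (g ^+ 2 - 2 * g + 1))
  else if k == 1%N then (x 1%N)^-1 *
      (l ^+ 3 * g - (N - 2) * l ^+ 2 * g + (N - 2) * d * g * l ^+ 2
       + (l * d + (N - 4) * (d - 1)) * (g ^+ 2 - 2 * g + 1))
  else if k == 2%N then g * l / x 2%N *
      (g + l - 1 + d * l ^+ 2 - 2 * l * d + d + l * d * g - d * g)
  else if k == 3%N then l / x 3%N *
      (1 + l * g - g + l * d - d + d * g * l ^+ 2 - 2 * l * d * g + d * g)
  else (x k)^-1 *
      (g ^+ 2 - 2 * g + l ^+ 2 * g + 1 + l * d - d * g * l ^+ 2 - 2 * l * d * g
       + l * g ^+ 2 * d + l ^+ 3 * d * g - d + 2 * d * g - d * g ^+ 2)).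

Definition u2B : 'cV[R]_n := mkcol n (fun k =>
  if k == 0%N then x 1%N *
      (l ^+ 3 * d * g - (N - 2) * d * g * l ^+ 2 - (N - 4) * d * (g - 1) ^+ 2
       + l + (N - 2) * l ^+ 2 * g - 2 * l * g + l * g ^+ 2 + (N - 4) * (g - 1) ^+ 2)
  else if k == 1%N then l *
      (l ^+ 3 * g - (N - 1) * l ^+ 2 * g - (N - 3) * (g - 1) ^+ 2)
  else if k == 2%N then x 1%N / x 2%N * g * l *
      (l * g + l ^+ 2 - 2 * l - g + 1 + d * l - d + d * g)
  else if k == 3%N then x 1%N / x 3%N * l *
      (l + l ^+ 2 * g - 2 * l * g - 1 + g + d + l * d * g - d * g)
  else x 1%N / x k *
      (l * g ^+ 2 - 2 * l * g + l ^+ 3 * g + l - g ^+ 2 + 2 * g - l ^+ 2 * g - 1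
       + d - 2 * d * g + d * g ^+ 2 + d * g * l ^+ 2)).

Definition v2B : 'cV[R]_n := mkcol n (fun k =>
  if k == 0%N then x 2%N * d * l * (1 + l * g - g) * (d + l - 1)
  else if k == 1%N then x 2%N / x 1%N * l * (1 + l * g - g) * (1 + d * l - d)
  else if k == 2%N then g * l *
      (l ^+ 3 * d - (N - 1) * d * l ^+ 2 - (N - 3) * (d - 1) ^+ 2)
  else if k == 3%N then x 2%N / x 3%N *
      (d * l ^+ 3 - (N - 2) * d * l ^+ 2 * (1 - g) - 2 * l * d * g
       + 2 * (N - 4) * d * (1 - g) + l * g + d ^+ 2 * l * g
       + (N - 4) * (- 1 + g - d ^+ 2 + d ^+ 2 * g))
  else x 2%N / x k * (1 + l * g - g) * (d * l ^+ 2 + 1 - 2 * d + d ^+ 2)).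

Definition z2B : 'cV[R]_n := mkcol n (fun k =>
  if k == 0%N then x 3%N * d * l *
      (l * g + l ^+ 2 - 2 * l - g + 1 + d * l - d + d * g)
  else if k == 1%N then x 3%N / x 1%N * l * (g + l - 1) * (1 + d * l - d)
  else if k == 2%N then x 3%N / x 2%N *
      (l ^+ 3 * d * g - (N - 2) * d * l ^+ 2 * (g - 1) - 2 * d * l
       + 2 * (N - 4) * d * (g - 1) + l + d ^+ 2 * l
       + (N - 4) * (1 - g + d ^+ 2 - d ^+ 2 * g))
  else if k == 3%N then l *
      (d * l ^+ 3 - (N - 1) * d * l ^+ 2 - (N - 3) * (d - 1) ^+ 2)
  else x 3%N / x k *
      (d * g * l ^+ 2 + l ^+ 3 * d - d * l ^+ 2 - 2 * d * l - 2 * d * g + 2 * d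
       - 1 + g + l + d ^+ 2 * l - d ^+ 2 + d ^+ 2 * g)).

Definition y2B : 'cV[R]_n := mkcol n (fun k =>
  if k == 0%N then x 4%N * d * l * (g ^+ 2 - 2 * g + l ^+ 2 * g + 1) * (d + l - 1)
  else if k == 1%N then x 4%N / x 1%N * l *
      (g ^+ 2 - 2 * g + l ^+ 2 * g + 1) * (1 + d * l - d)
  else if k == 2%N then x 4%N / x 2%N * g * l *
      (d * g * l ^+ 2 + l ^+ 3 * d - d * l ^+ 2 - 2 * d * l - 2 * d * g + 2 * d
       - 1 + g + l + d ^+ 2 * l - d ^+ 2 + d ^+ 2 * g)
  else if k == 3%N then x 4%N / x 3%N * l *
      (d * l ^+ 2 + l ^+ 3 * d * g - d * g * l ^+ 2 - 2 * l * d * g - 2 * d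
       + 2 * d * g - g + 1 + l * g + d ^+ 2 + d ^+ 2 * l * g - d ^+ 2 * g)
  else x 4%N / x k *
      (g ^+ 2 - 2 * g + l ^+ 2 * g + 1) * (d * l ^+ 2 + 1 - 2 * d + d ^+ 2)).
End Case2B.

End Defs.

From HB Require Import structures.
From mathcomp Require Import all_boot all_order all_algebra.
From mathcomp Require Import reals.
From mathcomp Require Import ring lra.
Import Order.TTheory GRing.Theory Num.Theory.
Local Open Scope ring_scope.
Set Implicit Arguments. Unset Strict Implicit. Unset Printing Implicit Defensive.

(** With [D = diag x], each of the matrices P, Q, R is [D^-1 B D] for a pattern
    [B] that does not depend on [x] and is all ones outside its leading [K x K]
    block ([K = 3] for P, [K = 4] for Q and R).  Eigenvectors of the matrix are
    [D^-1] times eigenvectors of [B], and for a nonzero eigenvalue the last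
    [n - K] coordinates of an eigenvector of [B] coincide, so the eigenproblem
    reduces to a linear system in [K + 1] unknowns.  For [lambda != 0] its
    determinant vanishes exactly when [q lambda = 0], where [q] is [char1],
    [char2A] or [char2B], and [q] has a root [mu > n].  The stated vector [w]
    solves the reduced system whenever [q lambda = 0] and is entrywise positive
    when moreover [lambda > n]; hence [mu] is an eigenvalue,
    [lambda_max >= mu > n], every eigenvalue above [n] is a root of [q], and
    [w lambda_max] is the Perron vector.  For the other vectors the cross
    products [W k * U k0 - W k0 * U k] of the x-free profiles are multiples of
    [q lambda], which makes them proportional to [w] at [lambda_max]. *)

(** * Perron vectors of diagonally scaled matrices with a constant tail *)

Section RightEigenvectors.
Variables (F : fieldType) (n : nat).

Lemma eigenvalue_trmx (A : 'M[F]_n) a : eigenvalue A^T a = eigenvalue A a.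
Proof.
rewrite /eigenvalue /eigenspace !kermx_eq0 /row_free -mxrank_tr.
by rewrite linearB /= tr_scalar_mx trmxK.
Qed.

Lemma eigenvalue_colP (A : 'M[F]_n) a :
  reflect (exists2 v : 'cV_n, A *m v = a *: v & v != 0) (eigenvalue A a).
Proof.
rewrite -eigenvalue_trmx; apply: (iffP eigenvalueP) => -[v Av v0]; exists v^T;
  rewrite ?trmx_eq0 //.
- by rewrite -[A]trmxK -trmx_mul Av linearZ.
- by rewrite -trmx_mul Av linearZ.
Qed.

End RightEigenvectors.

Section PerronVectorFromCharacteristicEquation.
Variables (R : realType) (n : nat) (A : 'M[R]_n) (q : R -> R)
  (w : R -> 'cV[R]_n) (N : R).
Hypothesis n_gt0 : (0 < n)%N.
Hypothesis char_root : exists2 mu, N < mu & q mu = 0.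
Hypothesis char_eigen : forall l, q l = 0 -> A *m w l = l *: w l.
Hypothesis eigen_char :
  forall l (v : 'cV[R]_n), N < l -> A *m v = l *: v -> v != 0 -> q l = 0.
Hypothesis char_gt0 : forall l, N < l -> q l = 0 -> forall i, 0 < w l i 0.

Lemma lambda_max_char l : is_lambda_max A l -> N < l /\ q l = 0.
Proof.
case=> eig_l l_max; have [mu N_mu q_mu] := char_root.
have mu_eig : eigenvalue A mu.
  apply/eigenvalue_colP; exists (w mu); first exact: char_eigen.
  apply/eqP => /matrixP/(_ (Ordinal n_gt0) ord0).
  by rewrite mxE => w0; have := char_gt0 N_mu q_mu (Ordinal n_gt0); rewrite w0 ltxx.
have N_l : N < l := lt_le_trans N_mu (l_max _ mu_eig).
split=> //; have /eigenvalue_colP[v Av v0] := eig_l.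
exact: eigen_char Av v0.
Qed.

Lemma principal_eigvec_char l :
  is_lambda_max A l -> is_principal_right_eigvec A (w l).
Proof.
move=> l_max; have [N_l q_l] := lambda_max_char l_max.
by exists l; split=> //; [exact: char_eigen | exact: char_gt0].
Qed.

End PerronVectorFromCharacteristicEquation.

Definition dcol (R : realType) (n : nat) (x P : nat -> R) : 'cV[R]_n :=
  mkcol n (fun k => P k / x k).

Section DiagonalScaling.
Variables (R : realType) (n : nat) (x : nat -> R) (b : nat -> nat -> R)
  (M : 'M[R]_n).
Hypothesis x_gt0 : forall i, (i < n)%N -> 0 < x i.
Hypothesis M_scaled : forall i j : 'I_n, M i j = x j / x i * b i j.

Let x_neq0 i : (i < n)%N -> x i != 0.
Proof. by move/x_gt0/lt0r_neq0. Qed.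

Lemma mulmx_dcolE (P : nat -> R) (i : 'I_n) :
  (M *m dcol n x P) i 0 = (\sum_(j < n) b i j * P j) / x i.
Proof.
rewrite mxE mulr_suml; apply: eq_bigr => j _; rewrite !mxE M_scaled.
by field; rewrite !x_neq0.
Qed.

Lemma dcol_eigen (P : nat -> R) l :
  (forall i, (i < n)%N -> \sum_(j < n) b i j * P j = l * P i) ->
  M *m dcol n x P = l *: dcol n x P.
Proof.
by move=> Pl; apply/matrixP => i j; rewrite ord1 mulmx_dcolE Pl // !mxE mulrA.
Qed.

Definition coords (v : 'cV[R]_n) (k : nat) : R :=
  x k * oapp (fun i : 'I_n => v i 0) 0 (insub k).

Lemma coordsE (v : 'cV[R]_n) (i : 'I_n) : coords v i = x i * v i 0.
Proof. by rewrite /coords valK. Qed.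

Lemma eigen_coords (v : 'cV[R]_n) l : M *m v = l *: v ->
  forall i, (i < n)%N -> \sum_(j < n) b i j * coords v j = l * coords v i.
Proof.
move=> Mv i lt_in; have := congr1 (fun A : 'cV_n => x i * A (Ordinal lt_in) 0) Mv.
rewrite !mxE (coordsE v (Ordinal lt_in)) mulr_sumr mulrCA => <-.
apply: eq_bigr => j _; rewrite coordsE M_scaled /=; field; exact: x_neq0.
Qed.

Lemma coords_neq0 (v : 'cV[R]_n) : v != 0 ->
  exists2 k, (k < n)%N & coords v k != 0.
Proof.
move=> /eqP v_neq0; have [k /eqP vk] : exists k : 'I_n, v k 0 != 0.
  apply/existsP; apply: contra_notT v_neq0 => /existsPn v0.
  by apply/matrixP => i j; rewrite ord1 mxE; apply/eqP/negPn/v0.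
by exists k => //; rewrite coordsE mulf_neq0 ?x_neq0 //; apply/eqP.
Qed.

Lemma dcol_gt0 (P : nat -> R) : (forall k, 0 < P k) -> forall i, 0 < dcol n x P i 0.
Proof. by move=> P_gt0 i; rewrite mxE divr_gt0 ?x_gt0. Qed.

End DiagonalScaling.

Lemma normalized_gt0 (R : realType) n (x : nat -> R) : x 0%N = 1 ->
  (forall i, (1 <= i < n)%N -> 0 < x i) -> forall i, (i < n)%N -> 0 < x i.
Proof. by move=> x0 x_gt0 [|i] lt_in; rewrite ?x0 ?ltr01 ?x_gt0. Qed.

Lemma dcolZ (R : realType) n (x P Q : nat -> R) c :
  (forall k, P k = c * Q k) -> dcol n x P = c *: dcol n x Q.
Proof. by move=> PQ; apply/matrixP => i j; rewrite !mxE PQ mulrA. Qed.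

Lemma proportional_profiles (R : fieldType) (P Q : nat -> R) k0 :
  Q k0 != 0 -> (forall k, P k * Q k0 = P k0 * Q k) ->
  forall k, P k = P k0 / Q k0 * Q k.
Proof. by move=> Qk0 PQ k; rewrite mulrAC -PQ mulfK. Qed.

Lemma dcol_proportional (R : realType) n (x W U : nat -> R) a k0 :
  a != 0 -> U k0 != 0 -> (forall k, W k * U k0 = W k0 * U k) ->
  exists c, dcol n x W = c *: (a *: dcol n x U).
Proof.
move=> a_neq0 Uk0 WU; exists (W k0 / U k0 / a); rewrite scalerA divfK //.
by apply: dcolZ; exact: proportional_profiles.
Qed.

(* [t K] stands for the common value of the coordinates [K <= j < n]; it does
   not contribute when [K = n]. *)
Definition tail_sum (R : fieldType) (n K : nat) (b : nat -> nat -> R) (t : nat -> R)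
    (i : nat) : R :=
  \sum_(j < K) b i j * t j + (n - K)%:R * t K.

Section TailReduction.
Variables (R : fieldType) (n K : nat) (b : nat -> nat -> R).
Hypothesis K_le_n : (K <= n)%N.
Hypothesis b_tail : forall i j, (K <= i)%N || (K <= j)%N -> b i j = 1.

Lemma sum_tail (t : nat -> R) i : (forall j, (K <= j < n)%N -> t j = t K) ->
  \sum_(j < n) b i j * t j = tail_sum n K b t i.
Proof.
move=> t_tail; rewrite -(big_mkord xpredT (fun j => b i j * t j)).
rewrite (big_cat_nat (n := K)) //= big_mkord; congr (_ + _).
rewrite (eq_big_nat _ _ (F2 := fun => t K)) ?sumr_const_nat ?mulr_natl //.
by move=> j /andP[Kj jn]; rewrite b_tail ?Kj ?orbT // mul1r (t_tail j) ?Kj.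
Qed.

Lemma tail_sum_tail t i : (K <= i)%N -> tail_sum n K b t i = tail_sum n K b t K.
Proof.
move=> Ki; rewrite /tail_sum; congr (_ + _); apply: eq_bigr => j _.
by rewrite !b_tail ?Ki ?leqnn.
Qed.

Lemma tail_eigen (t : nat -> R) l : (forall j, (K <= j < n)%N -> t j = t K) ->
  (forall i, (i <= K)%N -> (i < n)%N -> tail_sum n K b t i = l * t i) ->
  forall i, (i < n)%N -> \sum_(j < n) b i j * t j = l * t i.
Proof.
move=> t_tail t_eig i lt_in; rewrite sum_tail //.
case: (leqP K i) => [Ki | /ltnW iK]; last exact: t_eig.
by rewrite tail_sum_tail // t_eig ?(leq_ltn_trans Ki) // -(t_tail i) ?Ki.
Qed.

Lemma eigen_tail_const (t : nat -> R) l : l != 0 ->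
  (forall i, (i < n)%N -> \sum_(j < n) b i j * t j = l * t i) ->
  forall j, (K <= j < n)%N -> t j = t K.
Proof.
move=> l_neq0 t_eig j /andP[Kj jn].
have tailE i : (K <= i < n)%N -> t i = (\sum_(k < n) t k) / l.
  case/andP=> Ki lt_in; apply: (mulIf l_neq0); rewrite divfK // mulrC -t_eig //.
  by apply: eq_bigr => k _; rewrite b_tail ?Ki // mul1r.
by rewrite !tailE ?Kj ?leqnn ?(leq_ltn_trans Kj).
Qed.

Lemma eigen_char_eq0 (t : nat -> R) l c : l != 0 ->
  (forall i, (i < n)%N -> \sum_(j < n) b i j * t j = l * t i) ->
  (exists2 k, (k < n)%N & t k != 0) ->
  (forall s : nat -> R,
     (forall i, (i <= K)%N -> (i < n)%N -> tail_sum n K b s i = l * s i) ->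
     forall i, (i <= K)%N -> (i < n)%N -> c * s i = 0) ->
  c = 0.
Proof.
move=> l_neq0 t_eig [k kn tk_neq0] char.
have t_tail := eigen_tail_const l_neq0 t_eig.
have reduced i : (i <= K)%N -> (i < n)%N -> tail_sum n K b t i = l * t i.
  by move=> _ lt_in; rewrite -sum_tail ?t_eig.
case: (leqP K k) => [Kk | /ltnW kK].
  have := char t reduced K (leqnn K) (leq_ltn_trans Kk kn).
  by rewrite -(t_tail k) ?Kk // => /eqP; rewrite mulf_eq0 (negbTE tk_neq0) orbF => /eqP.
have := char t reduced k kK kn.
by move/eqP; rewrite mulf_eq0 (negbTE tk_neq0) orbF => /eqP.
Qed.

End TailReduction.

Section ScaledTailPerron.
Variables (R : realType) (n K : nat) (x : nat -> R) (b : nat -> nat -> R)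
  (M : 'M[R]_n) (q : R -> R) (W : R -> nat -> R) (N : R).
Hypotheses (K_le_n : (K <= n)%N) (n_gt0 : (0 < n)%N) (N_ge0 : 0 <= N).
Hypothesis x_gt0 : forall i, (i < n)%N -> 0 < x i.
Hypothesis M_scaled : forall i j : 'I_n, M i j = x j / x i * b i j.
Hypothesis b_tail : forall i j, (K <= i)%N || (K <= j)%N -> b i j = 1.
Hypothesis char_root : exists2 mu, N < mu & q mu = 0.
Hypothesis W_tail : forall l j, (K <= j)%N -> W l j = W l K.
Hypothesis W_eigen : forall l, q l = 0 ->
  forall i, (i <= K)%N -> (i < n)%N -> tail_sum n K b (W l) i = l * W l i.
Hypothesis b_char : forall l, N < l -> forall s : nat -> R,
  (forall i, (i <= K)%N -> (i < n)%N -> tail_sum n K b s i = l * s i) ->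
  forall i, (i <= K)%N -> (i < n)%N -> q l * s i = 0.
Hypothesis W_gt0 : forall l, N < l -> q l = 0 -> forall k, 0 < W l k.

Lemma scaled_tail_perron l : is_lambda_max M l ->
  [/\ N < l, q l = 0 & is_principal_right_eigvec M (dcol n x (W l))].
Proof.
have W_eig l' : q l' = 0 -> M *m dcol n x (W l') = l' *: dcol n x (W l').
  move=> q_l'; apply: (dcol_eigen x_gt0 M_scaled).
  by apply: (tail_eigen K_le_n b_tail) => [j /andP[/W_tail] | ]; last exact: W_eigen.
have eig_char l' (v : 'cV[R]_n) : N < l' -> M *m v = l' *: v -> v != 0 -> q l' = 0.
  move=> N_l' Mv v_neq0; have l'_neq0 : l' != 0 by rewrite gt_eqF ?(le_lt_trans N_ge0).
  apply: (eigen_char_eq0 K_le_n b_tail l'_neq0 (eigen_coords x_gt0 M_scaled Mv)).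
    exact: coords_neq0.
  exact: b_char.
have W_pos l' : N < l' -> q l' = 0 -> forall i, 0 < dcol n x (W l') i 0.
  by move=> N_l' q_l'; apply: dcol_gt0 => //; exact: W_gt0.
move=> l_max; have [N_l q_l] := lambda_max_char n_gt0 char_root W_eig eig_char W_pos l_max.
by split=> //; exact: (principal_eigvec_char n_gt0 char_root W_eig eig_char W_pos).
Qed.

End ScaledTailPerron.

(** * The x-free patterns and their characteristic equations *)

Definition Pbase (R : fieldType) (d g : R) (i j : nat) : R :=
  if (i == 0%N) && (j == 1%N) then d
  else if (i == 1%N) && (j == 0%N) then d^-1
  else if (i == 0%N) && (j == 2%N) then g
  else if (i == 2%N) && (j == 0%N) then g^-1
  else 1.

Definition QRbase (R : fieldType) (d g : R) (i j : nat) : R :=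
  if (i == 0%N) && (j == 1%N) then d
  else if (i == 1%N) && (j == 0%N) then d^-1
  else if (i == 2%N) && (j == 3%N) then g
  else if (i == 3%N) && (j == 2%N) then g^-1
  else 1.

Section ScaledPatterns.
Variables (R : realType) (n : nat) (x : nat -> R) (d g : R).
Hypothesis x0 : x 0%N = 1.

Lemma Pmat_scaled (i j : 'I_n) : Pmat n x d g i j = x j / x i * Pbase d g i j.
Proof.
rewrite mxE /Pbase; case: ifP => [/andP[/eqP-> /eqP->] | _].
  by rewrite x0 divr1 mulrC.
case: ifP => [/andP[/eqP-> /eqP->] | _]; first by rewrite x0 mul1r invfM mulrC.
case: ifP => [/andP[/eqP-> /eqP->] | _]; first by rewrite x0 divr1 mulrC.
case: ifP => [/andP[/eqP-> /eqP->] | _]; first by rewrite x0 mul1r invfM mulrC.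
by rewrite mulr1.
Qed.

Lemma QRmat_scaled (i j : 'I_n) : QRmat n x d g i j = x j / x i * QRbase d g i j.
Proof.
rewrite mxE /QRbase; case: ifP => [/andP[/eqP-> /eqP->] | _].
  by rewrite x0 divr1 mulrC.
case: ifP => [/andP[/eqP-> /eqP->] | _]; first by rewrite x0 mul1r invfM mulrC.
case: ifP => [/andP[/eqP-> /eqP->] | _]; first by ring.
case: ifP => [/andP[/eqP-> /eqP->] | _]; first by rewrite invfM; ring.
by rewrite mulr1.
Qed.

End ScaledPatterns.

Lemma Pbase_tail (R : fieldType) (d g : R) i j :
  (3 <= i)%N || (3 <= j)%N -> Pbase d g i j = 1.
Proof. by case: i => [|[|[|i]]]; case: j => [|[|[|j]]]. Qed.

Lemma QRbase_tail (R : fieldType) (d g : R) i j :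
  (4 <= i)%N || (4 <= j)%N -> QRbase d g i j = 1.
Proof. by case: i => [|[|[|[|i]]]]; case: j => [|[|[|[|j]]]]. Qed.

Definition dev1 (R : fieldType) (a : R) : R := (a - 1) ^+ 2 / a.

Lemma dev1_ge0 (R : realFieldType) (a : R) : 0 < a -> 0 <= dev1 a.
Proof. by move=> a_gt0; rewrite divr_ge0 ?sqr_ge0 ?ltW. Qed.

Lemma dev1_gt0 (R : realFieldType) (a : R) : 0 < a -> a != 1 -> 0 < dev1 a.
Proof. by move=> a_gt0 a1; rewrite divr_gt0 // exprn_even_gt0 //= subr_eq0. Qed.

Lemma residual_comb_eq0 (R : pzRingType) (m : nat) (r c : nat -> R) (z : R) :
  (forall i, (i < m)%N -> r i = 0) -> z = \sum_(i < m) c i * r i -> z = 0.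
Proof. by move=> r0 ->; rewrite big1 // => i _; rewrite r0 ?mulr0. Qed.

Lemma root_gt (R : realType) (f : {poly R}) (a b : R) :
  a <= b -> f.[a] < 0 -> 0 <= f.[b] -> exists2 mu, a < mu & root f mu.
Proof.
move=> le_ab fa fb.
have [mu /andP[a_mu _] f_mu] := poly_ivt le_ab (introT andP (conj (ltW fa) fb)).
exists mu => //; rewrite lt_neqAle a_mu andbT; apply: contraTneq f_mu => <-.
by rewrite /root lt_eqF.
Qed.

Lemma char_root_gt (R : realType) (m : nat) (N c0 c1 c2 : R) :
  (2 <= m)%N -> 1 <= N -> 0 <= c0 -> 0 <= c1 -> 0 <= c2 -> 0 < c0 + c1 + c2 ->
  exists2 mu, N < mu & mu ^+ m * (mu - N) - (c2 * mu ^+ 2 + c1 * mu + c0) = 0.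
Proof.
move=> m2 N_ge1 c0_ge0 c1_ge0 c2_ge0 c_gt0.
pose f : {poly R} := 'X^m * ('X - N%:P) - (c2 *: 'X^2 + c1 *: 'X + c0%:P).
have fE t : f.[t] = t ^+ m * (t - N) - (c2 * t ^+ 2 + c1 * t + c0).
  by rewrite /f !hornerE.
pose b := N + 1 + (c0 + c1 + c2).
have b_gt1 : 1 < b by rewrite /b; lra.
have bm : b ^+ 2 <= b ^+ m by rewrite ler_eXn2l.
have b2 : b <= b ^+ 2 by rewrite -[leLHS]expr1 ler_eXn2l.
have [|||mu N_mu /rootP f_mu] := @root_gt R f N b; last by exists mu; rewrite -?fE.
- by rewrite /b; lra.
- have N2 : 1 <= N ^+ 2 by rewrite expr_ge1 // (le_trans ler01).
  by rewrite fE subrr mulr0 sub0r oppr_lt0; nra.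
- rewrite fE (_ : b - N = 1 + (c0 + c1 + c2)); last by rewrite /b; ring.
  nra.
Qed.

Lemma eq_of_char (R : pzRingType) (q c a b : R) : q = 0 -> a - b = c * q -> a = b.
Proof. by move=> -> /eqP; rewrite mulr0 subr_eq0 => /eqP. Qed.

Lemma gt0_mul_char (R : numDomainType) (c q Q G a : R) :
  0 < c -> q = 0 -> c * a = Q * q + G -> 0 < G -> 0 < a.
Proof. by move=> c_gt0 ->; rewrite mulr0 add0r => <-; rewrite pmulr_rgt0. Qed.

Lemma gt0_eq (R : numDomainType) (b a : R) : a = b -> 0 < b -> 0 < a.
Proof. by move=> ->. Qed.

Ltac pos := first
  [ assumption | exact: ltr01 | exact: ltr0Sn
  | apply: mulr_gt0; pos | apply: exprn_gt0; pos | apply: divr_gt0; pos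
  | apply: addr_gt0; pos
  | apply: ltr_wpDl; [nneg | pos] | apply: ltr_wpDr; [nneg | pos] ]
with nneg := first
  [ exact: sqr_ge0 | apply: mulr_ge0; nneg | apply: addr_ge0; nneg
  | rewrite invr_ge0; nneg | apply: ltW; pos ].

(** * Case 1: the matrix P *)

Section Case1.
Variables (R : realType) (n : nat) (d g : R).
Hypotheses (n_ge4 : (4 <= n)%N) (d_gt0 : 0 < d) (g_gt0 : 0 < g).
Local Notation N := (n%:R : R).
Let d_neq0 : d != 0. Proof. exact: lt0r_neq0. Qed.
Let g_neq0 : g != 0. Proof. exact: lt0r_neq0. Qed.
Let n_ge3 : (3 <= n)%N. Proof. exact: ltnW. Qed.
Let N_gt3 : 0 < N - 3. Proof. by rewrite subr_gt0 (ltr_nat R 3 n). Qed.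

Definition char1 (l : R) : R :=
  l ^+ 2 * (l - N) - ((N - 3) * (dev1 d + dev1 g) + (g - d) ^+ 2 / (d * g)).

Definition W1 (l : R) (k : nat) : R :=
  if k == 0%N then d * g * l * (l - N + 1)
  else if k == 1%N then g * l - (N - 2) * g + d + (N - 3) * d * g
  else if k == 2%N then d * l - (N - 2) * d + g + (N - 3) * d * g
  else g + d + d * g * l - 2 * d * g.

Definition U1 (l : R) (k : nat) : R :=
  if k == 0%N then g * l * (d * l - (N - 2) * d + g + N - 3)
  else if k == 1%N then g * l ^+ 3 - (N - 1) * g * l ^+ 2 - (N - 3) * (g ^+ 2 - 2 * g + 1)
  else if k == 2%N then g * l ^+ 2 - g * l + d * l + (N - 3) * (d * g - d - g + 1)
  else g * l ^+ 2 - g * l - g + d + d * g * l - d * g + g ^+ 2.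

Definition V1 (l : R) (k : nat) : R :=
  if k == 0%N then d * l * (d + g * l - (N - 2) * g + N - 3)
  else if k == 1%N then d * l ^+ 2 - d * l + g * l + (N - 3) * (d * g - d - g + 1)
  else if k == 2%N then d * l ^+ 3 - (N - 1) * d * l ^+ 2 - (N - 3) * (d ^+ 2 - 2 * d + 1)
  else d * l ^+ 2 - d * l + g - d + d ^+ 2 + d * g * l - d * g.

Definition Z1 (l : R) (k : nat) : R :=
  if k == 0%N then d * g * l * (d + g + l - 2)
  else if k == 1%N then d * g * l ^+ 2 - d * g * l + g ^+ 2 + g * l - g - d * g + d
  else if k == 2%N then d * g * l ^+ 2 - d * g * l - d * g + g + d ^+ 2 + d * l - d
  else d * g * l ^+ 2 - 4 * d * g + g + d + d ^+ 2 * g + g ^+ 2 * d.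

Lemma char1_root : d != 1 -> exists2 mu, N < mu & char1 mu = 0.
Proof.
move=> d1; set c0 := (N - 3) * (dev1 d + dev1 g) + (g - d) ^+ 2 / (d * g).
have c0_gt0 : 0 < c0.
  apply: ltr_pwDl; first by rewrite mulr_gt0 // ltr_pwDl ?dev1_gt0 ?dev1_ge0.
  by rewrite divr_ge0 ?sqr_ge0 ?ltW ?mulr_gt0.
have [||||||mu N_mu q_mu] := char_root_gt (m := 2) (N := N) (c0 := c0) (c1 := 0) (c2 := 0).
all: rewrite ?addr0 ?lexx ?(ltW c0_gt0) //.
  by rewrite (ler_nat R 1 n) (leq_trans _ n_ge4).
by exists mu => //; rewrite -[RHS]q_mu /char1 -/c0; ring.
Qed.

Let above_N l : N < l -> [/\ 0 < l, 0 < l - N & 0 < l - 2].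
Proof.
move=> N_l; have N4 : 4 <= N by rewrite (ler_nat R 4 n).
by split; lra.
Qed.

Lemma W1_tail l k : (3 <= k)%N -> W1 l k = W1 l 3.
Proof. by case: k => [|[|[|k]]]. Qed.

Lemma W1_eigen l : char1 l = 0 ->
  forall i, (i <= 3)%N -> (i < n)%N -> tail_sum n 3 (Pbase d g) (W1 l) i = l * W1 l i.
Proof.
move=> q_l i le_i3 _; apply/eqP; rewrite -subr_eq0; apply/eqP.
rewrite /tail_sum !big_ord_recr big_ord0 /= /Pbase /W1 natrB //.
case: i le_i3 => [|[|[|[|//]]]] _ /=.
- transitivity (- (d * g) * char1 l); last by rewrite q_l mulr0.
  by rewrite /char1 /dev1; field; rewrite d_neq0 g_neq0.
- by field.
- by field.
- by field.
Qed.

Ltac expand := rewrite /tail_sum !big_ord_recr !big_ord0 /Pbase /char1 /dev1 /=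
  natrB ?n_ge3 //; field; rewrite ?d_neq0 ?g_neq0.

(* Cramer's rule: the coefficient lists are the rows of the adjugate of the
   matrix [C - l] of the reduced system, and [\det (C - l) = l * char1 l]. *)
Lemma Pbase_char l : N < l -> forall s : nat -> R,
  (forall i, (i <= 3)%N -> (i < n)%N -> tail_sum n 3 (Pbase d g) s i = l * s i) ->
  forall i, (i <= 3)%N -> (i < n)%N -> char1 l * s i = 0.
Proof.
move=> /above_N[/lt0r_neq0 l_neq0 _ _] s s_eig i le_i3 lt_in.
apply: (mulfI l_neq0); rewrite mulr0 mulrA; move: i le_i3 lt_in.
have r0 i : (i < 4)%N -> tail_sum n 3 (Pbase d g) s i - l * s i = 0.
  by move=> lt_i4; rewrite s_eig ?subrr // (leq_trans lt_i4).
case=> [|[|[|[|//]]]] _ _.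
- apply: (residual_comb_eq0 (c := nth 0 [::
      - l ^+ 2 + l ^+ 2 * N - l ^+ 3;
      3 * l - l * N - l * g - 2 * l * d + l * d * N - l ^+ 2 * d;
      3 * l - l * N - 2 * l * g + l * g * N - l * d - l ^+ 2 * g;
      - 6 * l + 2 * l * N + 3 * l * g - l * g * N + 3 * l * d - l * d * N + 3 * l ^+ 2
        - l ^+ 2 * N]) r0).
  by expand.
- apply: (residual_comb_eq0 (c := nth 0 [::
      - 2 * l / d + l * N / d - l / g + 3 * l - l * N - l ^+ 2 / d;
      - 3 / g + N / g + 6 - 2 * N - 3 * g + g * N - l ^+ 2 + l ^+ 2 * N - l ^+ 3;
      3 / d - N / d - 3 * g / d + g * N / d - 3 + N + 3 * g - g * N - l * g / d + l - l ^+ 2;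
      - 3 / d + N / d + 3 * g / d - g * N / d + 3 / g - N / g - 3 + N + 3 * l / d
        - l * N / d - 3 * l + l * N + 3 * l ^+ 2 - l ^+ 2 * N]) r0).
  by expand.
- apply: (residual_comb_eq0 (c := nth 0 [::
      - l / d - 2 * l / g + l * N / g + 3 * l - l * N - l ^+ 2 / g;
      3 / g - N / g - 3 + N - 3 * d / g + d * N / g + 3 * d - d * N + l - l * d / g - l ^+ 2;
      - 3 / d + N / d + 6 - 2 * N - 3 * d + d * N - l ^+ 2 + l ^+ 2 * N - l ^+ 3;
      3 / d - N / d - 3 / g + N / g - 3 + N + 3 * d / g - d * N / g + 3 * l / g - l * N / g
        - 3 * l + l * N + 3 * l ^+ 2 - l ^+ 2 * N]) r0).
  by expand.
- apply: (residual_comb_eq0 (c := nth 0 [::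
      - l / d - l / g + 2 * l - l ^+ 2;
      1 - g - d / g + d + l - l * d - l ^+ 2;
      - g / d + 1 + g - d + l - l * g - l ^+ 2;
      g / d - 2 + d / g + 3 * l ^+ 2 - l ^+ 3]) r0).
  by expand.
Qed.

Lemma W1_gt0 l : N < l -> forall k, 0 < W1 l k.
Proof.
move=> /above_N[l_gt0 lN_gt0 l2_gt0] [|[|[|k]]]; rewrite /W1 /=.
- by pos.
- by apply: (gt0_eq (b := g * (l - N) + 2 * g + d + (N - 3) * d * g)); [ring | pos].
- by apply: (gt0_eq (b := d * (l - N) + 2 * d + g + (N - 3) * d * g)); [ring | pos].
- by apply: (gt0_eq (b := g + d + d * g * (l - 2))); [ring | pos].
Qed.

Lemma U1_0_gt0 l : N < l -> 0 < U1 l 0.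
Proof.
move=> /above_N[l_gt0 lN_gt0 _]; rewrite /U1 /=.
by apply: (gt0_eq (b := g * l * (d * (l - N) + 2 * d + g + (N - 3)))); [ring | pos].
Qed.

Lemma V1_0_gt0 l : N < l -> 0 < V1 l 0.
Proof.
move=> /above_N[l_gt0 lN_gt0 _]; rewrite /V1 /=.
by apply: (gt0_eq (b := d * l * (d + g * (l - N) + 2 * g + (N - 3)))); [ring | pos].
Qed.

Lemma Z1_0_gt0 l : N < l -> 0 < Z1 l 0.
Proof.
move=> /above_N[l_gt0 _ l2_gt0]; rewrite /Z1 /=.
by apply: (gt0_eq (b := d * g * l * (d + g + (l - 2)))); [ring | pos].
Qed.

Ltac cross := rewrite /char1 /dev1 /W1 /U1 /V1 /Z1 /=; field; rewrite ?d_neq0 ?g_neq0.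

Lemma W1_U1_cross l : char1 l = 0 -> forall k, W1 l k * U1 l 0 = W1 l 0 * U1 l k.
Proof.
move=> q_l [|[|[|k]]] //.
- by apply: (eq_of_char (c := l * d * g ^+ 2 * (N - 2 - l)) q_l); cross.
- by apply: (eq_of_char (c := - (l * d * g ^+ 2)) q_l); cross.
- by apply: (eq_of_char (c := - (l * d * g ^+ 2)) q_l); cross.
Qed.

Lemma W1_V1_cross l : char1 l = 0 -> forall k, W1 l k * V1 l 0 = W1 l 0 * V1 l k.
Proof.
move=> q_l [|[|[|k]]] //.
- by apply: (eq_of_char (c := - (l * d ^+ 2 * g)) q_l); cross.
- by apply: (eq_of_char (c := l * d ^+ 2 * g * (N - 2 - l)) q_l); cross.
- by apply: (eq_of_char (c := - (l * d ^+ 2 * g)) q_l); cross.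
Qed.

Lemma W1_Z1_cross l : char1 l = 0 -> forall k, W1 l k * Z1 l 0 = W1 l 0 * Z1 l k.
Proof.
by move=> q_l [|[|[|k]]] //; apply: (eq_of_char (c := - (l * d ^+ 2 * g ^+ 2)) q_l); cross.
Qed.

End Case1.

Section Case1Perron.
Variables (R : realType) (n : nat) (x : nat -> R) (d g : R).
Hypotheses (n_ge4 : (4 <= n)%N) (x0 : x 0%N = 1).
Hypothesis x_gt0 : forall i, (1 <= i < n)%N -> 0 < x i.
Hypotheses (d_gt0 : 0 < d) (g_gt0 : 0 < g) (d1 : d != 1).

Let n_gt0 : (0 < n)%N. Proof. by apply: leq_trans n_ge4. Qed.

Let x_neq0 i : (1 <= i < n)%N -> x i != 0.
Proof. by move/x_gt0/lt0r_neq0. Qed.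

Let xk_neq0 k : (0 < k < 4)%N -> x k != 0.
Proof. by case/andP=> k0 k4; rewrite x_neq0 // k0 (leq_trans k4 n_ge4). Qed.

Lemma case1_vectorsE l :
  [/\ w1 n x d g l = dcol n x (W1 n d g l),
      u1 n x d g l = x 1%N *: dcol n x (U1 n d g l),
      v1 n x d g l = x 2%N *: dcol n x (V1 n d g l) &
      z1 n x d g l = x 3%N *: dcol n x (Z1 d g l)].
Proof.
have [[x1 x2] x3] := (@xk_neq0 1%N isT, @xk_neq0 2%N isT, @xk_neq0 3%N isT).
by split; apply/matrixP => -[[|[|[|k]]] hk] j; rewrite !mxE /W1 /U1 /V1 /Z1 /= ?x0;
  field; rewrite ?x1 ?x2 ?x3 ?x_neq0.
Qed.

Lemma case1 l : is_lambda_max (Pmat n x d g) l ->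
  is_principal_right_eigvec (Pmat n x d g) (w1 n x d g l) /\
  exists c11 c12 c13 : R,
    [/\ w1 n x d g l = c11 *: u1 n x d g l,
        w1 n x d g l = c12 *: v1 n x d g l &
        w1 n x d g l = c13 *: z1 n x d g l].
Proof.
move=> l_max; have [N_l q_l w_perron] := scaled_tail_perron (K := 3) (ltnW n_ge4)
  n_gt0 (ler0n _ _) (normalized_gt0 x0 x_gt0) (Pmat_scaled (n := n) d g x0) (@Pbase_tail _ d g)
  (char1_root n_ge4 d_gt0 g_gt0 d1) (@W1_tail _ n d g) (W1_eigen n_ge4 d_gt0 g_gt0)
  (Pbase_char n_ge4 d_gt0 g_gt0) (fun l' N_l' _ => W1_gt0 n_ge4 d_gt0 g_gt0 N_l') l_max.
have [wE uE vE zE] := case1_vectorsE l.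
split; first by rewrite wE.
rewrite wE uE vE zE.
have [c11 e11] := dcol_proportional n x (@xk_neq0 1%N isT)
  (lt0r_neq0 (U1_0_gt0 n_ge4 d_gt0 g_gt0 N_l)) (W1_U1_cross d_gt0 g_gt0 q_l).
have [c12 e12] := dcol_proportional n x (@xk_neq0 2%N isT)
  (lt0r_neq0 (V1_0_gt0 n_ge4 d_gt0 g_gt0 N_l)) (W1_V1_cross d_gt0 g_gt0 q_l).
have [c13 e13] := dcol_proportional n x (@xk_neq0 3%N isT)
  (lt0r_neq0 (Z1_0_gt0 n_ge4 d_gt0 g_gt0 N_l)) (W1_Z1_cross d_gt0 g_gt0 q_l).
by exists c11, c12, c13.
Qed.

End Case1Perron.

(** * Case 2A: the matrix Q, n = 4 *)

Section Case2A.
Variables (R : realType) (d g : R).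
Hypotheses (d_gt0 : 0 < d) (g_gt0 : 0 < g).
Let d_neq0 : d != 0. Proof. exact: lt0r_neq0. Qed.
Let g_neq0 : g != 0. Proof. exact: lt0r_neq0. Qed.

Definition char2A (l : R) : R :=
  l ^+ 3 * (l - 4) - 2 * (dev1 d + dev1 g) * l - dev1 d * dev1 g.

Definition W2A (l : R) (k : nat) : R :=
  if k == 0%N then d * (l ^+ 3 * g - 3 * l ^+ 2 * g - 1 + 2 * g - g ^+ 2)
  else if k == 1%N then l ^+ 2 * g - 2 * l * g + d + 2 * l * d * g - 2 * d * g + d * g ^+ 2
  else if k == 2%N then g * (g + l - 1 + d * l ^+ 2 - 2 * l * d + d + l * d * g - d * g)
  else 1 + l * g - g + l * d - d + d * g * l ^+ 2 - 2 * l * d * g + d * g.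

Definition U2A (l : R) (k : nat) : R :=
  if k == 0%N then d * g * l ^+ 2 - 2 * l * d * g + 1 + 2 * l * g - 2 * g + g ^+ 2
  else if k == 1%N then l ^+ 3 * g - 3 * l ^+ 2 * g - 1 + 2 * g - g ^+ 2
  else if k == 2%N then g * (l * g + l ^+ 2 - 2 * l - g + 1 + l * d - d + d * g)
  else l + l ^+ 2 * g - 2 * l * g - 1 + g + d + l * d * g - d * g.

Definition V2A (l : R) (k : nat) : R :=
  if k == 0%N then d * (1 + l * g - g) * (d + l - 1)
  else if k == 1%N then 1 + l * g - g + l * d - d + d * g * l ^+ 2 - 2 * l * d * g + d * g
  else if k == 2%N then g * (d * l ^+ 3 - 3 * d * l ^+ 2 - 1 + 2 * d - d ^+ 2)
  else 2 * l * d * g + d * l ^+ 2 - 2 * l * d - 2 * d * g + g + d ^+ 2 * g.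

Definition Z2A (l : R) (k : nat) : R :=
  if k == 0%N then d * (l * g + l ^+ 2 - 2 * l - g + 1 + l * d - d + d * g)
  else if k == 1%N then g + l - 1 + d * l ^+ 2 - 2 * l * d + d + l * d * g - d * g
  else if k == 2%N then 2 * l * d + d * g * l ^+ 2 - 2 * l * d * g - 2 * d + 1 + d ^+ 2
  else d * l ^+ 3 - 3 * d * l ^+ 2 - 1 + 2 * d - d ^+ 2.

Lemma char2A_root : d != 1 -> exists2 mu, 4 < mu & char2A mu = 0.
Proof.
move=> d1; have c_gt0 : 0 < dev1 d * dev1 g + 2 * (dev1 d + dev1 g) + 0.
  rewrite addr0; apply: ltr_wpDl; first by rewrite mulr_ge0 ?dev1_ge0.
  by rewrite mulr_gt0 // ltr_pwDl ?dev1_gt0 ?dev1_ge0.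
have [||||||mu N_mu q_mu] := char_root_gt (m := 3) (N := 4) (c0 := dev1 d * dev1 g)
  (c1 := 2 * (dev1 d + dev1 g)) (c2 := 0).
- by [].
- by rewrite (ler_nat R 1 4).
- by rewrite mulr_ge0 ?dev1_ge0.
- by rewrite mulr_ge0 ?addr_ge0 ?dev1_ge0.
- by [].
- exact: c_gt0.
- by exists mu => //; rewrite -[RHS]q_mu /char2A; ring.
Qed.

Let above_4 (l : R) : 4 < l -> [/\ 0 < l, 0 < l - 1 & 0 < l - 2].
Proof. by move=> l4; split; lra. Qed.

Lemma W2A_tail l k : (4 <= k)%N -> W2A l k = W2A l 4.
Proof. by case: k => [|[|[|[|k]]]]. Qed.

Lemma W2A_eigen l : char2A l = 0 ->
  forall i, (i <= 4)%N -> (i < 4)%N -> tail_sum 4 4 (QRbase d g) (W2A l) i = l * W2A l i.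
Proof.
move=> q_l i _ lt_i4; apply/eqP; rewrite -subr_eq0; apply/eqP.
rewrite /tail_sum !big_ord_recr big_ord0 /= subnn /QRbase /W2A.
case: i lt_i4 => [|[|[|[|//]]]] _ /=.
- transitivity (- (d * g) * char2A l); last by rewrite q_l mulr0.
  by rewrite /char2A /dev1; field; rewrite d_neq0 g_neq0.
- by field.
- by field.
- by field.
Qed.

Ltac expand := rewrite /tail_sum !big_ord_recr !big_ord0 subnn /QRbase /char2A /dev1 /=;
  field; rewrite ?d_neq0 ?g_neq0.

(* Cramer's rule, with [\det (C - l) = char2A l]. *)
Lemma QRbase_char2A l (s : nat -> R) :
  (forall i, (i <= 4)%N -> (i < 4)%N -> tail_sum 4 4 (QRbase d g) s i = l * s i) ->
  forall i, (i <= 4)%N -> (i < 4)%N -> char2A l * s i = 0.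
Proof.
move=> s_eig.
have r0 i : (i < 4)%N -> tail_sum 4 4 (QRbase d g) s i - l * s i = 0.
  by move=> lt_i4; rewrite s_eig ?subrr // ltnW.
case=> [|[|[|[|//]]]] _ _.
- apply: (residual_comb_eq0 (c := nth 0 [::
      1 / g - 2 + g + 3 * l ^+ 2 - l ^+ 3;
      - 1 / g + 2 - g - 2 * l + 2 * l * d - l ^+ 2 * d;
      1 / g - 1 - d / g + d - l / g + 2 * l - l * d - l ^+ 2;
      - 1 + g + d - d * g + 2 * l - l * g - l * d - l ^+ 2]) r0).
  by expand.
- apply: (residual_comb_eq0 (c := nth 0 [::
      - 1 / g + 2 - g + 2 * l / d - 2 * l - l ^+ 2 / d;
      1 / g - 2 + g + 3 * l ^+ 2 - l ^+ 3;
      - 1 / (d * g) + 1 / d + 1 / g - 1 - l / d - l / g + 2 * l - l ^+ 2;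
      1 / d - g / d - 1 + g - l / d + 2 * l - l * g - l ^+ 2]) r0).
  by expand.
- apply: (residual_comb_eq0 (c := nth 0 [::
      1 / d - g / d - 1 + g - l / d + 2 * l - l * g - l ^+ 2;
      - 1 + g + d - d * g + 2 * l - l * g - l * d - l ^+ 2;
      1 / d - 2 + d + 3 * l ^+ 2 - l ^+ 3;
      - 1 / d + 2 - d - 2 * l + 2 * l * g - l ^+ 2 * g]) r0).
  by expand.
- apply: (residual_comb_eq0 (c := nth 0 [::
      - 1 / (d * g) + 1 / d + 1 / g - 1 - l / d - l / g + 2 * l - l ^+ 2;
      1 / g - 1 - d / g + d - l / g + 2 * l - l * d - l ^+ 2;
      - 1 / d + 2 - d + 2 * l / g - 2 * l - l ^+ 2 / g;
      1 / d - 2 + d + 3 * l ^+ 2 - l ^+ 3]) r0).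
  by expand.
Qed.

Lemma W2A_gt0 l : 4 < l -> char2A l = 0 -> forall k, 0 < W2A l k.
Proof.
move=> /above_4[l_gt0 l1_gt0 l2_gt0] q_l [|[|[|k]]]; rewrite /W2A /=.
- apply: (gt0_mul_char (c := l) (Q := d * g) l_gt0 q_l
    (G := d * g * l ^+ 3 + 2 * g * (d - 1) ^+ 2 * l + (d - 1) ^+ 2 * (g - 1) ^+ 2
          + d * (g - 1) ^+ 2 * l)).
    by rewrite /char2A /dev1; field; rewrite d_neq0 g_neq0.
  by pos.
- by apply: (gt0_eq (b := g * l * (l - 2) + d + 2 * d * g * (l - 1) + d * g ^+ 2)); [ring | pos].
- apply: (gt0_eq (b := g * (g + (l - 1) + d * (l - 1) ^+ 2 + d * g * (l - 1)))).
    by ring.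
  by pos.
- apply: (gt0_eq (b := 1 + g * (l - 1) + d * (l - 1) + d * g * (l - 1) ^+ 2)).
    by ring.
  by pos.
Qed.

Lemma U2A_0_gt0 l : 4 < l -> 0 < U2A l 0.
Proof.
move=> /above_4[l_gt0 l1_gt0 l2_gt0]; rewrite /U2A /=.
by apply: (gt0_eq (b := d * g * l * (l - 2) + 1 + 2 * g * (l - 1) + g ^+ 2)); [ring | pos].
Qed.

Lemma V2A_0_gt0 l : 4 < l -> 0 < V2A l 0.
Proof.
move=> /above_4[l_gt0 l1_gt0 l2_gt0]; rewrite /V2A /=.
by apply: (gt0_eq (b := d * (1 + g * (l - 1)) * (d + (l - 1)))); [ring | pos].
Qed.

Lemma Z2A_0_gt0 l : 4 < l -> 0 < Z2A l 0.
Proof.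
move=> /above_4[l_gt0 l1_gt0 l2_gt0]; rewrite /Z2A /=.
apply: (gt0_eq (b := d * ((l - 1) ^+ 2 + g * (l - 1) + d * (l - 1) + d * g))).
  by ring.
by pos.
Qed.

Ltac cross := rewrite /char2A /dev1 /W2A /U2A /V2A /Z2A /=; field; rewrite ?d_neq0 ?g_neq0.

Lemma W2A_U2A_cross l : char2A l = 0 -> forall k, W2A l k * U2A l 0 = W2A l 0 * U2A l k.
Proof.
move=> q_l [|[|[|k]]] //.
- by apply: (eq_of_char (c := l * d * g ^+ 2 * (2 - l)) q_l); cross.
- by apply: (eq_of_char (c := - (d * g ^+ 2 * (g + l - 1))) q_l); cross.
- by apply: (eq_of_char (c := - (d * g * (1 - g + l * g))) q_l); cross.
Qed.

Lemma W2A_V2A_cross l : char2A l = 0 -> forall k, W2A l k * V2A l 0 = W2A l 0 * V2A l k.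
Proof.
move=> q_l [|[|[|k]]] //.
- by apply: (eq_of_char (c := - (d ^+ 2 * g * (1 - g + l * g))) q_l); cross.
- by apply: (eq_of_char (c := l * d ^+ 2 * g ^+ 2 * (2 - l)) q_l); cross.
- by apply: (eq_of_char (c := - (d ^+ 2 * g * (g + l - 1))) q_l); cross.
Qed.

Lemma W2A_Z2A_cross l : char2A l = 0 -> forall k, W2A l k * Z2A l 0 = W2A l 0 * Z2A l k.
Proof.
move=> q_l [|[|[|k]]] //.
- by apply: (eq_of_char (c := - (d ^+ 2 * g * (g + l - 1))) q_l); cross.
- by apply: (eq_of_char (c := - (d ^+ 2 * g * (1 - g + l * g))) q_l); cross.
- by apply: (eq_of_char (c := l * d ^+ 2 * g * (2 - l)) q_l); cross.
Qed.

End Case2A.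

Section Case2APerron.
Variables (R : realType) (x : nat -> R) (d g : R).
Hypotheses (x0 : x 0%N = 1) (x_gt0 : forall i, (1 <= i < 4)%N -> 0 < x i).
Hypotheses (d_gt0 : 0 < d) (g_gt0 : 0 < g) (d1 : d != 1).

Let xk_neq0 k : (0 < k < 4)%N -> x k != 0.
Proof. by move/x_gt0/lt0r_neq0. Qed.

Lemma case2A_vectorsE l :
  [/\ w2A x d g l = dcol 4 x (W2A d g l),
      u2A x d g l = x 1%N *: dcol 4 x (U2A d g l),
      v2A x d g l = x 2%N *: dcol 4 x (V2A d g l) &
      z2A x d g l = x 3%N *: dcol 4 x (Z2A d g l)].
Proof.
by split; apply/matrixP => -[[|[|[|[|//]]]] hk] j; rewrite !mxE /W2A /U2A /V2A /Z2A /= ?x0;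
  field; rewrite ?xk_neq0.
Qed.

Lemma case2A l : is_lambda_max (QRmat 4 x d g) l ->
  is_principal_right_eigvec (QRmat 4 x d g) (w2A x d g l) /\
  exists c21 c22 c23 : R,
    [/\ w2A x d g l = c21 *: u2A x d g l,
        w2A x d g l = c22 *: v2A x d g l &
        w2A x d g l = c23 *: z2A x d g l].
Proof.
move=> l_max; have [N_l q_l w_perron] := scaled_tail_perron (K := 4) (leqnn 4) isT
  (ler0n _ _) (normalized_gt0 x0 x_gt0) (QRmat_scaled (n := 4) d g x0) (@QRbase_tail _ d g)
  (char2A_root d_gt0 g_gt0 d1) (@W2A_tail _ d g) (W2A_eigen d_gt0 g_gt0)
  (fun l' _ => QRbase_char2A d_gt0 g_gt0 (l := l'))
  (fun l' N_l' => W2A_gt0 d_gt0 g_gt0 N_l') l_max.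
have [wE uE vE zE] := case2A_vectorsE l.
split; first by rewrite wE.
rewrite wE uE vE zE.
have [c21 e21] := dcol_proportional 4 x (@xk_neq0 1%N isT)
  (lt0r_neq0 (U2A_0_gt0 d_gt0 g_gt0 N_l)) (W2A_U2A_cross d_gt0 g_gt0 q_l).
have [c22 e22] := dcol_proportional 4 x (@xk_neq0 2%N isT)
  (lt0r_neq0 (V2A_0_gt0 d_gt0 g_gt0 N_l)) (W2A_V2A_cross d_gt0 g_gt0 q_l).
have [c23 e23] := dcol_proportional 4 x (@xk_neq0 3%N isT)
  (lt0r_neq0 (Z2A_0_gt0 d_gt0 g_gt0 N_l)) (W2A_Z2A_cross d_gt0 g_gt0 q_l).
by exists c21, c22, c23.
Qed.

End Case2APerron.

(** * Case 2B: the matrix R, n >= 5 *)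

Section Case2B.
Variables (R : realType) (n : nat) (d g : R).
Hypotheses (n_ge5 : (5 <= n)%N) (d_gt0 : 0 < d) (g_gt0 : 0 < g).
Local Notation N := (n%:R : R).
Let d_neq0 : d != 0. Proof. exact: lt0r_neq0. Qed.
Let g_neq0 : g != 0. Proof. exact: lt0r_neq0. Qed.
Let n_ge4 : (4 <= n)%N. Proof. exact: ltnW. Qed.
Let N_gt4 : 0 < N - 4. Proof. by rewrite subr_gt0 (ltr_nat R 4 n). Qed.

Definition char2B (l : R) : R :=
  l ^+ 4 * (l - N) - ((N - 2) * (dev1 d + dev1 g) * l ^+ 2 + dev1 d * dev1 g * l
                      + (N - 4) * (dev1 d * dev1 g)).

Definition W2B (l : R) (k : nat) : R :=
  if k == 0%N then d * l * (l ^+ 3 * g - (N - 1) * l ^+ 2 * g - (N - 3) * (g ^+ 2 - 2 * g + 1))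
  else if k == 1%N then l ^+ 3 * g - (N - 2) * l ^+ 2 * g + (N - 2) * d * g * l ^+ 2
       + (l * d + (N - 4) * (d - 1)) * (g ^+ 2 - 2 * g + 1)
  else if k == 2%N then g * l * (g + l - 1 + d * l ^+ 2 - 2 * l * d + d + l * d * g - d * g)
  else if k == 3%N then l * (1 + l * g - g + l * d - d + d * g * l ^+ 2 - 2 * l * d * g + d * g)
  else g ^+ 2 - 2 * g + l ^+ 2 * g + 1 + l * d - d * g * l ^+ 2 - 2 * l * d * g
       + l * g ^+ 2 * d + l ^+ 3 * d * g - d + 2 * d * g - d * g ^+ 2.

Definition U2B (l : R) (k : nat) : R :=
  if k == 0%N then l ^+ 3 * d * g - (N - 2) * d * g * l ^+ 2 - (N - 4) * d * (g - 1) ^+ 2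
       + l + (N - 2) * l ^+ 2 * g - 2 * l * g + l * g ^+ 2 + (N - 4) * (g - 1) ^+ 2
  else if k == 1%N then l * (l ^+ 3 * g - (N - 1) * l ^+ 2 * g - (N - 3) * (g - 1) ^+ 2)
  else if k == 2%N then g * l * (l * g + l ^+ 2 - 2 * l - g + 1 + d * l - d + d * g)
  else if k == 3%N then l * (l + l ^+ 2 * g - 2 * l * g - 1 + g + d + l * d * g - d * g)
  else l * g ^+ 2 - 2 * l * g + l ^+ 3 * g + l - g ^+ 2 + 2 * g - l ^+ 2 * g - 1
       + d - 2 * d * g + d * g ^+ 2 + d * g * l ^+ 2.

Definition V2B (l : R) (k : nat) : R :=
  if k == 0%N then d * l * (1 + l * g - g) * (d + l - 1)
  else if k == 1%N then l * (1 + l * g - g) * (1 + d * l - d)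
  else if k == 2%N then g * l * (l ^+ 3 * d - (N - 1) * d * l ^+ 2 - (N - 3) * (d - 1) ^+ 2)
  else if k == 3%N then d * l ^+ 3 - (N - 2) * d * l ^+ 2 * (1 - g) - 2 * l * d * g
       + 2 * (N - 4) * d * (1 - g) + l * g + d ^+ 2 * l * g
       + (N - 4) * (- 1 + g - d ^+ 2 + d ^+ 2 * g)
  else (1 + l * g - g) * (d * l ^+ 2 + 1 - 2 * d + d ^+ 2).

Definition Z2B (l : R) (k : nat) : R :=
  if k == 0%N then d * l * (l * g + l ^+ 2 - 2 * l - g + 1 + d * l - d + d * g)
  else if k == 1%N then l * (g + l - 1) * (1 + d * l - d)
  else if k == 2%N then l ^+ 3 * d * g - (N - 2) * d * l ^+ 2 * (g - 1) - 2 * d * l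
       + 2 * (N - 4) * d * (g - 1) + l + d ^+ 2 * l
       + (N - 4) * (1 - g + d ^+ 2 - d ^+ 2 * g)
  else if k == 3%N then l * (d * l ^+ 3 - (N - 1) * d * l ^+ 2 - (N - 3) * (d - 1) ^+ 2)
  else d * g * l ^+ 2 + l ^+ 3 * d - d * l ^+ 2 - 2 * d * l - 2 * d * g + 2 * d
       - 1 + g + l + d ^+ 2 * l - d ^+ 2 + d ^+ 2 * g.

Definition Y2B (l : R) (k : nat) : R :=
  if k == 0%N then d * l * (g ^+ 2 - 2 * g + l ^+ 2 * g + 1) * (d + l - 1)
  else if k == 1%N then l * (g ^+ 2 - 2 * g + l ^+ 2 * g + 1) * (1 + d * l - d)
  else if k == 2%N then g * l * (d * g * l ^+ 2 + l ^+ 3 * d - d * l ^+ 2 - 2 * d * l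
       - 2 * d * g + 2 * d - 1 + g + l + d ^+ 2 * l - d ^+ 2 + d ^+ 2 * g)
  else if k == 3%N then l * (d * l ^+ 2 + l ^+ 3 * d * g - d * g * l ^+ 2 - 2 * l * d * g
       - 2 * d + 2 * d * g - g + 1 + l * g + d ^+ 2 + d ^+ 2 * l * g - d ^+ 2 * g)
  else (g ^+ 2 - 2 * g + l ^+ 2 * g + 1) * (d * l ^+ 2 + 1 - 2 * d + d ^+ 2).

Lemma char2B_root : d != 1 -> exists2 mu, N < mu & char2B mu = 0.
Proof.
move=> d1; have N2_gt0 : 0 < N - 2 by have := N_gt4; lra.
have [dd dg] := (dev1_ge0 d_gt0, dev1_ge0 g_gt0).
have C_ge0 := mulr_ge0 dd dg.
have [||||||mu N_mu q_mu] := char_root_gt (m := 4) (N := N) (c0 := (N - 4) * (dev1 d * dev1 g))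
  (c1 := dev1 d * dev1 g) (c2 := (N - 2) * (dev1 d + dev1 g)).
- by [].
- by rewrite (ler_nat R 1 n) (leq_trans _ n_ge5).
- exact: mulr_ge0 (ltW N_gt4) C_ge0.
- exact: C_ge0.
- exact: mulr_ge0 (ltW N2_gt0) (addr_ge0 dd dg).
- apply: ltr_wpDl; first exact: addr_ge0 (mulr_ge0 (ltW N_gt4) C_ge0) C_ge0.
  exact: mulr_gt0 N2_gt0 (ltr_pwDl (dev1_gt0 d_gt0 d1) dg).
- by exists mu => //; rewrite -[RHS]q_mu /char2B; ring.
Qed.

Let above_N l : N < l -> [/\ 0 < l, 0 < l - N, 0 < l - 1 & 0 < l - 2].
Proof.
move=> N_l; have N5 : 5 <= N by rewrite (ler_nat R 5 n).
by split; lra.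
Qed.

Lemma W2B_tail l k : (4 <= k)%N -> W2B l k = W2B l 4.
Proof. by case: k => [|[|[|[|k]]]]. Qed.

Lemma W2B_eigen l : char2B l = 0 ->
  forall i, (i <= 4)%N -> (i < n)%N -> tail_sum n 4 (QRbase d g) (W2B l) i = l * W2B l i.
Proof.
move=> q_l i le_i4 _; apply/eqP; rewrite -subr_eq0; apply/eqP.
rewrite /tail_sum !big_ord_recr big_ord0 /= /QRbase /W2B natrB //.
case: i le_i4 => [|[|[|[|[|//]]]]] _ /=.
- transitivity (- (d * g) * char2B l); last by rewrite q_l mulr0.
  by rewrite /char2B /dev1; field; rewrite d_neq0 g_neq0.
- by field.
- by field.
- by field.
- by field.
Qed.

Ltac expand := rewrite /tail_sum !big_ord_recr !big_ord0 /QRbase /char2B /dev1 /=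
  natrB ?n_ge4 //; field; rewrite ?d_neq0 ?g_neq0.

(* Cramer's rule, with [\det (C - l) = - char2B l]. *)
Lemma QRbase_char2B l (s : nat -> R) :
  (forall i, (i <= 4)%N -> (i < n)%N -> tail_sum n 4 (QRbase d g) s i = l * s i) ->
  forall i, (i <= 4)%N -> (i < n)%N -> char2B l * s i = 0.
Proof.
move=> s_eig i le_i4 lt_in; apply: oppr_inj; rewrite oppr0 -mulNr; move: i le_i4 lt_in.
have r0 i : (i < 5)%N -> tail_sum n 4 (QRbase d g) s i - l * s i = 0.
  by move=> lt_i5; rewrite s_eig ?subrr // (leq_trans lt_i5).
case=> [|[|[|[|[|//]]]]] _ _.
- apply: (residual_comb_eq0 (c := nth 0 [::
      3 * l / g - l * N / g - 6 * l + 2 * l * N + 3 * l * g - l * g * N + l ^+ 3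
        - l ^+ 3 * N + l ^+ 4;
      - 4 / g + N / g + 8 - 2 * N - 4 * g + g * N + 4 * d / g - d * N / g - 8 * d
        + 2 * d * N + 4 * d * g - d * g * N + l / g - 2 * l + l * g - 2 * l ^+ 2
        + l ^+ 2 * N + 2 * l ^+ 2 * d - l ^+ 2 * d * N + l ^+ 3 * d;
      - l / g + l + l * d / g - l * d + l ^+ 2 / g - 2 * l ^+ 2 + l ^+ 2 * d + l ^+ 3;
      l - l * g - l * d + l * d * g - 2 * l ^+ 2 + l ^+ 2 * g + l ^+ 2 * d + l ^+ 3;
      4 / g - N / g - 8 + 2 * N + 4 * g - g * N - 4 * d / g + d * N / g + 8 * d - 2 * d * N
        - 4 * d * g + d * g * N - 4 * l / g + l * N / g + 8 * l - 2 * l * N - 4 * l * g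
        + l * g * N + 4 * l ^+ 2 - l ^+ 2 * N - 4 * l ^+ 2 * d + l ^+ 2 * d * N - 4 * l ^+ 3
        + l ^+ 3 * N]) r0).
  by expand.
- apply: (residual_comb_eq0 (c := nth 0 [::
      4 / (d * g) - N / (d * g) - 8 / d + 2 * N / d + 4 * g / d - g * N / d - 4 / g + N / g
        + 8 - 2 * N - 4 * g + g * N + l / g - 2 * l + l * g + 2 * l ^+ 2 / d
        - l ^+ 2 * N / d - 2 * l ^+ 2 + l ^+ 2 * N + l ^+ 3 / d;
      3 * l / g - l * N / g - 6 * l + 2 * l * N + 3 * l * g - l * g * N + l ^+ 3
        - l ^+ 3 * N + l ^+ 4;
      l / (d * g) - l / d - l / g + l + l ^+ 2 / d + l ^+ 2 / g - 2 * l ^+ 2 + l ^+ 3;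
      - l / d + l * g / d + l - l * g + l ^+ 2 / d - 2 * l ^+ 2 + l ^+ 2 * g + l ^+ 3;
      - 4 / (d * g) + N / (d * g) + 8 / d - 2 * N / d - 4 * g / d + g * N / d + 4 / g
        - N / g - 8 + 2 * N + 4 * g - g * N - 4 * l / g + l * N / g + 8 * l - 2 * l * N
        - 4 * l * g + l * g * N - 4 * l ^+ 2 / d + l ^+ 2 * N / d + 4 * l ^+ 2 - l ^+ 2 * N
        - 4 * l ^+ 3 + l ^+ 3 * N]) r0).
  by expand.
- apply: (residual_comb_eq0 (c := nth 0 [::
      - l / d + l * g / d + l - l * g + l ^+ 2 / d - 2 * l ^+ 2 + l ^+ 2 * g + l ^+ 3;
      l - l * g - l * d + l * d * g - 2 * l ^+ 2 + l ^+ 2 * g + l ^+ 2 * d + l ^+ 3;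
      3 * l / d - l * N / d - 6 * l + 2 * l * N + 3 * l * d - l * d * N + l ^+ 3
        - l ^+ 3 * N + l ^+ 4;
      - 4 / d + N / d + 4 * g / d - g * N / d + 8 - 2 * N - 8 * g + 2 * g * N - 4 * d
        + d * N + 4 * d * g - d * g * N + l / d - 2 * l + l * d - 2 * l ^+ 2 + l ^+ 2 * N
        + 2 * l ^+ 2 * g - l ^+ 2 * g * N + l ^+ 3 * g;
      4 / d - N / d - 4 * g / d + g * N / d - 8 + 2 * N + 8 * g - 2 * g * N + 4 * d - d * N
        - 4 * d * g + d * g * N - 4 * l / d + l * N / d + 8 * l - 2 * l * N - 4 * l * d
        + l * d * N + 4 * l ^+ 2 - l ^+ 2 * N - 4 * l ^+ 2 * g + l ^+ 2 * g * N - 4 * l ^+ 3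
        + l ^+ 3 * N]) r0).
  by expand.
- apply: (residual_comb_eq0 (c := nth 0 [::
      l / (d * g) - l / d - l / g + l + l ^+ 2 / d + l ^+ 2 / g - 2 * l ^+ 2 + l ^+ 3;
      - l / g + l + l * d / g - l * d + l ^+ 2 / g - 2 * l ^+ 2 + l ^+ 2 * d + l ^+ 3;
      4 / (d * g) - N / (d * g) - 4 / d + N / d - 8 / g + 2 * N / g + 8 - 2 * N + 4 * d / g
        - d * N / g - 4 * d + d * N + l / d - 2 * l + l * d + 2 * l ^+ 2 / g
        - l ^+ 2 * N / g - 2 * l ^+ 2 + l ^+ 2 * N + l ^+ 3 / g;
      3 * l / d - l * N / d - 6 * l + 2 * l * N + 3 * l * d - l * d * N + l ^+ 3
        - l ^+ 3 * N + l ^+ 4;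
      - 4 / (d * g) + N / (d * g) + 4 / d - N / d + 8 / g - 2 * N / g - 8 + 2 * N
        - 4 * d / g + d * N / g + 4 * d - d * N - 4 * l / d + l * N / d + 8 * l - 2 * l * N
        - 4 * l * d + l * d * N - 4 * l ^+ 2 / g + l ^+ 2 * N / g + 4 * l ^+ 2 - l ^+ 2 * N
        - 4 * l ^+ 3 + l ^+ 3 * N]) r0).
  by expand.
- apply: (residual_comb_eq0 (c := nth 0 [::
      1 / (d * g) - 2 / d + g / d - 1 / g + 2 - g + l / g - 2 * l + l * g + l ^+ 2 / d
        - l ^+ 2 + l ^+ 3;
      - 1 / g + 2 - g + d / g - 2 * d + d * g + l / g - 2 * l + l * g - l ^+ 2 + l ^+ 2 * d
        + l ^+ 3;
      1 / (d * g) - 1 / d - 2 / g + 2 + d / g - d + l / d - 2 * l + l * d + l ^+ 2 / g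
        - l ^+ 2 + l ^+ 3;
      - 1 / d + g / d + 2 - 2 * g - d + d * g + l / d - 2 * l + l * d - l ^+ 2 + l ^+ 2 * g
        + l ^+ 3;
      - 1 / (d * g) + 2 / d - g / d + 2 / g - 4 + 2 * g - d / g + 2 * d - d * g - 2 * l / d
        - 2 * l / g + 8 * l - 2 * l * g - 2 * l * d - 4 * l ^+ 3 + l ^+ 4]) r0).
  by expand.
Qed.

Lemma W2B_gt0 l : N < l -> char2B l = 0 -> forall k, 0 < W2B l k.
Proof.
move=> N_l q_l; have [l_gt0 lN_gt0 l1_gt0 l2_gt0] := above_N N_l.
have N2_gt0 : 0 < N - 2 by have := N_gt4; lra.
have l2_gt0' : 0 < l ^+ 2 by pos.
case=> [|[|[|[|k]]]]; rewrite /W2B /=.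
- apply: (gt0_mul_char (c := l ^+ 2) (Q := d * g * l) l2_gt0' q_l
    (G := d * g * l ^+ 5 + (g * (N - 2) * (d - 1) ^+ 2 * l ^+ 3 + d * (g - 1) ^+ 2 * l ^+ 3
          + (d - 1) ^+ 2 * (g - 1) ^+ 2 * l ^+ 2 + (N - 4) * (d - 1) ^+ 2 * (g - 1) ^+ 2 * l))).
    by rewrite /char2B /dev1; field; rewrite d_neq0 g_neq0.
  by apply: ltr_pwDl; [pos | nneg].
- apply: (gt0_mul_char (c := l ^+ 2) (Q := g) l2_gt0' q_l
    (G := g * l ^+ 4 + (g * (N - 2) * (d - 1) ^+ 2 / d * l ^+ 2 + (g - 1) ^+ 2 * l ^+ 2
          + (d - 1) ^+ 2 * (g - 1) ^+ 2 / d * l + (N - 4) * (d - 1) ^+ 2 * (g - 1) ^+ 2 / d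
          + l ^+ 2 * (g * l ^+ 2 + (N - 2) * d * g * l ^+ 2 + l * d * (g - 1) ^+ 2
                      + ((N - 4) * d + 1) * (g - 1) ^+ 2)))).
    by rewrite /char2B /dev1; field; rewrite d_neq0 g_neq0.
  by apply: ltr_pwDl; [pos | nneg].
- apply: (gt0_eq (b := g * l * (g + (l - 1) + d * (l - 1) ^+ 2 + d * g * (l - 1)))).
    by ring.
  by pos.
- apply: (gt0_eq (b := l * (1 + g * (l - 1) + d * (l - 1) + d * g * (l - 1) ^+ 2))).
    by ring.
  by pos.
- apply: (gt0_eq (b := (g - 1) ^+ 2 + l ^+ 2 * g + d * (l - 1) * ((g - 1) ^+ 2 + g * l ^+ 2))).
    by ring.
  by pos.
Qed.

(* [U2B l 0] has no evident sign, so the proportionality constant of [u2B] is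
   read off at index 2. *)
Lemma U2B_2_gt0 l : N < l -> 0 < U2B l 2.
Proof.
move=> /above_N[l_gt0 _ l1_gt0 _]; rewrite /U2B /=.
apply: (gt0_eq (b := g * l * ((l - 1) ^+ 2 + g * (l - 1) + d * (l - 1) + d * g))).
  by ring.
by pos.
Qed.

Lemma V2B_0_gt0 l : N < l -> 0 < V2B l 0.
Proof.
move=> /above_N[l_gt0 _ l1_gt0 _]; rewrite /V2B /=.
by apply: (gt0_eq (b := d * l * (1 + g * (l - 1)) * (d + (l - 1)))); [ring | pos].
Qed.

Lemma Z2B_0_gt0 l : N < l -> 0 < Z2B l 0.
Proof.
move=> /above_N[l_gt0 _ l1_gt0 _]; rewrite /Z2B /=.
apply: (gt0_eq (b := d * l * ((l - 1) ^+ 2 + g * (l - 1) + d * (l - 1) + d * g))).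
  by ring.
by pos.
Qed.

Lemma Y2B_0_gt0 l : N < l -> 0 < Y2B l 0.
Proof.
move=> /above_N[l_gt0 _ l1_gt0 _]; rewrite /Y2B /=.
apply: (gt0_eq (b := d * l * ((g - 1) ^+ 2 + l ^+ 2 * g) * (d + (l - 1)))).
  by ring.
by pos.
Qed.

Ltac cross := rewrite /char2B /dev1 /W2B /U2B /V2B /Z2B /Y2B /=; field; rewrite ?d_neq0 ?g_neq0.

Lemma W2B_U2B_cross l : char2B l = 0 -> forall k, W2B l k * U2B l 2 = W2B l 2 * U2B l k.
Proof.
move=> q_l [|[|[|[|k]]]] //.
- by apply: (eq_of_char (c := l * d * g ^+ 2 * (g + l - 1)) q_l); cross.
- by apply: (eq_of_char (c := - (l * d * g ^+ 2 * (g + l - 1))) q_l); cross.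
- by apply: (eq_of_char (c := 0) q_l); cross.
- by apply: (eq_of_char (c := 0) q_l); cross.
Qed.

Lemma W2B_V2B_cross l : char2B l = 0 -> forall k, W2B l k * V2B l 0 = W2B l 0 * V2B l k.
Proof.
move=> q_l [|[|[|[|k]]]] //.
- by apply: (eq_of_char (c := - (l * d ^+ 2 * g * (1 - g + l * g))) q_l); cross.
- by apply: (eq_of_char (c := l ^+ 2 * d ^+ 2 * g ^+ 2 * (N - 2 - l)) q_l); cross.
- by apply: (eq_of_char (c := l * d ^+ 2 * g * ((N - 3) * (1 - g) - l)) q_l); cross.
- by apply: (eq_of_char (c := - (l * d ^+ 2 * g * (1 - g + l * g))) q_l); cross.
Qed.

Lemma W2B_Z2B_cross l : char2B l = 0 -> forall k, W2B l k * Z2B l 0 = W2B l 0 * Z2B l k.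
Proof.
move=> q_l [|[|[|[|k]]]] //.
- by apply: (eq_of_char (c := - (l * d ^+ 2 * g * (g + l - 1))) q_l); cross.
- by apply: (eq_of_char (c := l * d ^+ 2 * g * ((N - 3) * (g - 1) - l * g)) q_l); cross.
- by apply: (eq_of_char (c := l ^+ 2 * d ^+ 2 * g * (N - 2 - l)) q_l); cross.
- by apply: (eq_of_char (c := - (l * d ^+ 2 * g * (g + l - 1))) q_l); cross.
Qed.

Lemma W2B_Y2B_cross l : char2B l = 0 -> forall k, W2B l k * Y2B l 0 = W2B l 0 * Y2B l k.
Proof.
move=> q_l [|[|[|[|k]]]] //.
- by apply: (eq_of_char (c := - (l * d ^+ 2 * g * ((g - 1) ^+ 2 + l ^+ 2 * g))) q_l); cross.
- by apply: (eq_of_char (c := - (l ^+ 2 * d ^+ 2 * g ^+ 2 * (g + l - 1))) q_l); cross.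
- by apply: (eq_of_char (c := - (l ^+ 2 * d ^+ 2 * g * (1 - g + l * g))) q_l); cross.
- by apply: (eq_of_char (c := - (l * d ^+ 2 * g * ((g - 1) ^+ 2 + l ^+ 2 * g))) q_l); cross.
Qed.

End Case2B.

Section Case2BPerron.
Variables (R : realType) (n : nat) (x : nat -> R) (d g : R).
Hypotheses (n_ge5 : (5 <= n)%N) (x0 : x 0%N = 1).
Hypothesis x_gt0 : forall i, (1 <= i < n)%N -> 0 < x i.
Hypotheses (d_gt0 : 0 < d) (g_gt0 : 0 < g) (d1 : d != 1).

Let x_neq0 i : (1 <= i < n)%N -> x i != 0.
Proof. by move/x_gt0/lt0r_neq0. Qed.

Let xk_neq0 k : (0 < k < 5)%N -> x k != 0.
Proof. by case/andP=> k0 k5; rewrite x_neq0 // k0 (leq_trans k5 n_ge5). Qed.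

Lemma case2B_vectorsE l :
  [/\ w2B n x d g l = dcol n x (W2B n d g l),
      u2B n x d g l = x 1%N *: dcol n x (U2B n d g l),
      v2B n x d g l = x 2%N *: dcol n x (V2B n d g l),
      z2B n x d g l = x 3%N *: dcol n x (Z2B n d g l) &
      y2B n x d g l = x 4%N *: dcol n x (Y2B d g l)].
Proof.
have [[[x1 x2] x3] x4] :=
  (@xk_neq0 1%N isT, @xk_neq0 2%N isT, @xk_neq0 3%N isT, @xk_neq0 4%N isT).
by split; apply/matrixP => -[[|[|[|[|k]]]] hk] j;
  rewrite !mxE /W2B /U2B /V2B /Z2B /Y2B /= ?x0; field; rewrite ?x1 ?x2 ?x3 ?x4 ?x_neq0.
Qed.

Let n_gt0 : (0 < n)%N. Proof. by apply: leq_trans n_ge5. Qed.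

Lemma case2B l : is_lambda_max (QRmat n x d g) l ->
  is_principal_right_eigvec (QRmat n x d g) (w2B n x d g l) /\
  exists c31 c32 c33 c34 : R,
    [/\ w2B n x d g l = c31 *: u2B n x d g l,
        w2B n x d g l = c32 *: v2B n x d g l,
        w2B n x d g l = c33 *: z2B n x d g l &
        w2B n x d g l = c34 *: y2B n x d g l].
Proof.
move=> l_max; have [N_l q_l w_perron] := scaled_tail_perron (K := 4) (ltnW n_ge5)
  n_gt0 (ler0n _ _) (normalized_gt0 x0 x_gt0) (QRmat_scaled (n := n) d g x0) (@QRbase_tail _ d g)
  (char2B_root n_ge5 d_gt0 g_gt0 d1) (@W2B_tail _ n d g) (W2B_eigen n_ge5 d_gt0 g_gt0)
  (fun l' _ => QRbase_char2B n_ge5 d_gt0 g_gt0 (l := l'))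
  (fun l' N_l' q_l' => W2B_gt0 n_ge5 d_gt0 g_gt0 N_l' q_l') l_max.
have [wE uE vE zE yE] := case2B_vectorsE l.
split; first by rewrite wE.
rewrite wE uE vE zE yE.
have [c31 e31] := dcol_proportional n x (@xk_neq0 1%N isT)
  (lt0r_neq0 (U2B_2_gt0 n_ge5 d_gt0 g_gt0 N_l)) (W2B_U2B_cross d_gt0 g_gt0 q_l).
have [c32 e32] := dcol_proportional n x (@xk_neq0 2%N isT)
  (lt0r_neq0 (V2B_0_gt0 n_ge5 d_gt0 g_gt0 N_l)) (W2B_V2B_cross d_gt0 g_gt0 q_l).
have [c33 e33] := dcol_proportional n x (@xk_neq0 3%N isT)
  (lt0r_neq0 (Z2B_0_gt0 n_ge5 d_gt0 g_gt0 N_l)) (W2B_Z2B_cross d_gt0 g_gt0 q_l).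
have [c34 e34] := dcol_proportional n x (@xk_neq0 4%N isT)
  (lt0r_neq0 (Y2B_0_gt0 n_ge5 d_gt0 g_gt0 N_l)) (W2B_Y2B_cross d_gt0 g_gt0 q_l).
by exists c31, c32, c33, c34.
Qed.

End Case2BPerron.

Theorem theorem5 (R : realType) (n : nat) (x : nat -> R) (gamma delta : R)
  (hx0 : x 0%N = 1) (hx : forall i : nat, (1 <= i < n)%N -> 0 < x i)
  (hg : 0 < gamma) (hd : 0 < delta) (hg1 : gamma != 1) (hd1 : delta != 1) :
  (* Case 1 *)
  ((4 <= n)%N -> forall l : R, is_lambda_max (Pmat n x delta gamma) l ->
     is_principal_right_eigvec (Pmat n x delta gamma) (w1 n x delta gamma l) /\
     exists c11 c12 c13 : R,
       [/\ w1 n x delta gamma l = c11 *: u1 n x delta gamma l,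
           w1 n x delta gamma l = c12 *: v1 n x delta gamma l &
           w1 n x delta gamma l = c13 *: z1 n x delta gamma l]) /\
  (* Case 2A *)
  (n = 4%N -> forall l : R, is_lambda_max (QRmat 4 x delta gamma) l ->
     is_principal_right_eigvec (QRmat 4 x delta gamma) (w2A x delta gamma l) /\
     exists c21 c22 c23 : R,
       [/\ w2A x delta gamma l = c21 *: u2A x delta gamma l,
           w2A x delta gamma l = c22 *: v2A x delta gamma l &
           w2A x delta gamma l = c23 *: z2A x delta gamma l]) /\
  (* Case 2B *)
  ((5 <= n)%N -> forall l : R, is_lambda_max (QRmat n x delta gamma) l ->
     is_principal_right_eigvec (QRmat n x delta gamma) (w2B n x delta gamma l) /\
     exists c31 c32 c33 c34 : R,
       [/\ w2B n x delta gamma l = c31 *: u2B n x delta gamma l,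
           w2B n x delta gamma l = c32 *: v2B n x delta gamma l,
           w2B n x delta gamma l = c33 *: z2B n x delta gamma l &
           w2B n x delta gamma l = c34 *: y2B n x delta gamma l]).
Proof.
split; first by move=> n_ge4; exact: case1.
split; last by move=> n_ge5; exact: case2B.
by move=> n4; subst n; exact: case2A.
Qed.
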